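(* Let $(u^{\mathrm{in}},v^{\mathrm{in}})\in(\dot H^0)^2$ and let $N$ be a positive integer. Then the solution $(u^N,v^N)$ of the Galerkin system $$\partial_t u^N_k=\tfrac12 i\,\mathcal P\Big[k\sum_{k_1+k_2=k}e^{3ikk_1k_2t}\big((\mathcal Pu^N)_{k_1}(\mathcal Pv^N)_{k_2}-(\mathcal Pu^N)_{k_1}(\mathcal Pu^N)_{k_2}\big)\Big],$$ $$\partial_t v^N_k=\tfrac12 i\,\mathcal P\Big[k\sum_{k_1+k_2=k}e^{3ikk_1k_2t}\big((\mathcal Pu^N)_{k_1}(\mathcal Pv^N)_{k_2}-(\mathcal Pv^N)_{k_1}(\mathcal Pv^N)_{k_2}\big)\Big],$$ $k\in\mathbb Z_0$, $u^N_k(0)=u^{\mathrm{in}}_k$, $v^N_k(0)=v^{\mathrm{in}}_k$, exists globally in time. Furthermore, the quantity $$\mathcal E(u^N(t),v^N(t)):=2\|u^N(t)\|_{\dot H^0}^2+2\|v^N(t)\|_{\dot H^0}^2+\|u^N(t)-v^N(t)\|_{\dot H^0}^2$$ is conserved in time.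
   Context: $\mathbb T=[0,2\pi]$ periodic, $\mathbb Z_0=\mathbb Z\setminus\{0\}$. Mean-zero real-valued functions are identified with their Fourier coefficients $(u_k)_{k\in\mathbb Z_0}$, $\overline{u_k}=u_{-k}$. For $s\in\mathbb R$, $\|u\|_{\dot H^s}^2=\sum_{k\in\mathbb Z_0}|k|^{2s}|u_k|^2$, $\dot H^s$ the space of such $u$ with finite norm, and $\|(u,v)\|^2_{(\dot H^s)^2}=\|u\|^2_{\dot H^s}+\|v\|^2_{\dot H^s}$. For the fixed integer $N$, $\mathcal P$ is the projection onto Fourier modes $|k|\leq N$: $(\mathcal Pu)_k=u_k$ if $|k|\leq N$ and $0$ if $|k|>N$; applied to the bracketed sequence indexed by $k$, it sets the $k$-th component to zero when $|k|>N$. The Galerkin system is a finite system of ODEs, locally well-posed in $(\dot H^0)^2$. *)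

From Stdlib Require Export Reals ZArith.
From Coquelicot Require Export Coquelicot.

(* A mean-zero function is represented by its Fourier coefficients
   u : Z -> C (the coefficient u 0 is required to vanish). *)
Definition fourier := Z -> C.

Definition real_meanzero (u : fourier) : Prop :=
  u 0%Z = RtoC 0 /\ forall k : Z, Cconj (u k) = u (- k)%Z.

(* terms of ||u||_{H^0}^2 = sum_{k in Z_0} |u_k|^2, grouped as k = +-(n+1) *)
Definition L2_terms (u : fourier) (n : nat) : R :=
  (Cmod (u (Z.of_nat n + 1)%Z))^2 + (Cmod (u (- (Z.of_nat n + 1))%Z))^2.

Definition in_H0 (u : fourier) : Prop :=
  real_meanzero u /\ ex_series (L2_terms u).

Definition H0_norm2 (u : fourier) : R := Series (L2_terms u).

Definition fsub (u v : fourier) : fourier := fun k => Cminus (u k) (v k).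

Definition energy (u v : fourier) : R :=
  2 * H0_norm2 u + 2 * H0_norm2 v + H0_norm2 (fsub u v).

Definition proj (N : nat) (u : fourier) : fourier :=
  fun k => if (k =? 0)%Z then RtoC 0
           else if (Z.abs k <=? Z.of_nat N)%Z then u k else RtoC 0.

Definition cexpi (theta : R) : C := (cos theta, sin theta).

(* sum_{k1 + k2 = k} e^{3 i k k1 k2 t} a_{k1} b_{k2}, for a b supported
   in 0 < |j| <= N: the sum runs over k1 = j - N, j = 0..2N. *)
Definition conv (N : nat) (t : R) (k : Z) (a b : fourier) : C :=
  sum_n (fun j : nat =>
           let k1 := (Z.of_nat j - Z.of_nat N)%Z in
           let k2 := (k - k1)%Z in
           Cmult (cexpi (3 * IZR k * IZR k1 * IZR k2 * t)) (Cmult (a k1) (b k2)))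
        (2 * N).

(* The right-hand sides of the Galerkin system, for k in Z_0.
   The outer projection P sets the k-th component to 0 when |k| > N. *)
Definition rhs_u (N : nat) (t : R) (u v : fourier) (k : Z) : C :=
  if (Z.abs k <=? Z.of_nat N)%Z then
    Cmult (Cmult (Cmult (RtoC (/2)) Ci) (RtoC (IZR k)))
      (Cminus (conv N t k (proj N u) (proj N v))
              (conv N t k (proj N u) (proj N u)))
  else RtoC 0.

Definition rhs_v (N : nat) (t : R) (u v : fourier) (k : Z) : C :=
  if (Z.abs k <=? Z.of_nat N)%Z then
    Cmult (Cmult (Cmult (RtoC (/2)) Ci) (RtoC (IZR k)))
      (Cminus (conv N t k (proj N u) (proj N v))
              (conv N t k (proj N v) (proj N v)))
  else RtoC 0.

(* The Galerkin nonlinearity only involves the finitely many modes 0 < |k| <= N and is quadratic,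
   hence locally Lipschitz.  Clamping every coefficient to a square of side 2 M makes it globally
   bounded and Lipschitz (in the sup norm over all modes), so Picard iteration yields a global solution
   of the clamped system; it keeps the modes |k| > N frozen and preserves the reality condition
   conj u_k = u_{-k}, because the field commutes with conjugation.

   Along this solution, the time derivative of the truncated energy 2|u|^2 + 2|v|^2 + |u - v|^2 is, as
   long as the clamping is inactive, the real part of a combination of the trilinear forms
     W(P,Q,S) = sum_{a+b+c=0} a e^{-3iabct} P_a Q_b S_c,
   and W(P,Q,S) + W(Q,P,S) + W(S,Q,P) = 0 because a + b + c = 0; the combination arising here vanishes.
   Taking M = E(0) + 2, the clamping is inactive while the energy stays below E(0) + 1, so a continuity
   argument shows that the energy never moves.  Hence the clamped solution solves the Galerkin system
   for all t >= 0, and the untouched tail gives conservation of the full energy. *)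

From Stdlib Require Import Lra Lia FunctionalExtensionality Classical.
Open Scope R_scope.

Notation RIntC := (@RInt C_R_CompleteNormedModule).

(* [ring] reads the carrier off the left-hand side, which may be typed in a
   Coquelicot structure over C. *)
Ltac Cring := match goal with |- ?a = ?b => change (@eq C a b); (ring || (symmetry; ring)) end.
Ltac Rring := match goal with |- ?a = ?b => change (@eq R a b); ring end.

Lemma norm_C_R (z : C) : @norm R_AbsRing C_R_NormedModule z = Cmod z.
Proof.
  destruct z as [a b]. unfold Cmod.
  change (sqrt (Rabs a ^ 2 + Rabs b ^ 2) = sqrt (a ^ 2 + b ^ 2)). now rewrite !pow2_abs.
Qed.

Lemma fst_Cminus (a b : C) : fst (Cminus a b) = fst a - fst b.
Proof. destruct a, b; simpl; ring. Qed.

Lemma snd_Cminus (a b : C) : snd (Cminus a b) = snd a - snd b.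
Proof. destruct a, b; simpl; ring. Qed.

Lemma Cmod_minus_triangle (a b c : C) :
  Cmod (Cminus a c) <= Cmod (Cminus a b) + Cmod (Cminus b c).
Proof.
  replace (Cminus a c) with (Cplus (Cminus a b) (Cminus b c)) by ring.
  apply Cmod_triangle.
Qed.

Lemma Cmod_minus_sym (a b : C) : Cmod (Cminus a b) = Cmod (Cminus b a).
Proof. replace (Cminus a b) with (Copp (Cminus b a)) by ring. apply Cmod_opp. Qed.

Lemma Cmod_minus_le_0 (a b : C) : Cmod (Cminus a b) <= 0 -> a = b.
Proof.
  intros H.
  assert (Hab : Cminus a b = RtoC 0).
  { apply Cmod_eq_0. pose proof (Cmod_ge_0 (Cminus a b)). lra. }
  replace a with (Cplus (Cminus a b) b) by ring. rewrite Hab. ring.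
Qed.

Lemma Cmod_le_Rabs_sum (z : C) : Cmod z <= Rabs (fst z) + Rabs (snd z).
Proof.
  destruct z as [a b]. unfold Cmod; simpl.
  pose proof (Rabs_pos a). pose proof (Rabs_pos b).
  rewrite <- (sqrt_pow2 (Rabs a + Rabs b)) by lra.
  apply sqrt_le_1_alt.
  rewrite <- (pow2_abs a) at 1. rewrite <- (pow2_abs b) at 1. nra.
Qed.

Lemma Rabs_snd_le_Cmod (z : C) : Rabs (snd z) <= Cmod z.
Proof.
  destruct z as [a b]. unfold Cmod; simpl.
  rewrite <- sqrt_Rsqr_abs. apply sqrt_le_1_alt. unfold Rsqr. nra.
Qed.

Lemma Cmod_sqr (z : C) : Cmod z ^ 2 = fst z ^ 2 + snd z ^ 2.
Proof.
  unfold Cmod. rewrite pow2_sqrt; [reflexivity|].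
  pose proof (pow2_ge_0 (fst z)). pose proof (pow2_ge_0 (snd z)). lra.
Qed.

Lemma continuous_of_lipschitz (f : R -> C) (c : R) :
  (forall s s', Cmod (Cminus (f s) (f s')) <= c * Rabs (s - s')) ->
  forall s, @continuous R_UniformSpace C_R_NormedModule f s.
Proof.
  intros H s. apply filterlim_locally. intros eps.
  assert (Hc : 0 < Rabs c + 1) by (pose proof (Rabs_pos c); lra).
  assert (Hd : 0 < eps / (Rabs c + 1)) by (apply Rdiv_lt_0_compat; [apply cond_pos | lra]).
  exists (mkposreal _ Hd). intros y Hy.
  apply (@norm_compat1 R_AbsRing C_R_NormedModule).
  rewrite norm_C_R. change (Cmod (Cminus (f y) (f s)) < eps).
  change (Rabs (y - s) < eps / (Rabs c + 1)) in Hy.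
  apply Rmult_lt_compat_l with (r := Rabs c + 1) in Hy; [|lra].
  replace ((Rabs c + 1) * (eps / (Rabs c + 1))) with (pos eps) in Hy by (field; lra).
  pose proof (H y s). pose proof (Rle_abs c). pose proof (Rabs_pos (y - s)). nra.
Qed.

Lemma RInt_Cconj (f : R -> C) (a b : R) :
  @ex_RInt C_R_NormedModule f a b ->
  RIntC (fun s => Cconj (f s)) a b = Cconj (RIntC f a b).
Proof.
  intros H. apply is_RInt_unique.
  pose proof (@RInt_correct C_R_CompleteNormedModule f a b H) as Hf.
  apply (@is_RInt_fct_extend_pair R_NormedModule R_NormedModule).
  - exact (@is_RInt_fct_extend_fst R_NormedModule R_NormedModule _ _ _ _ Hf).
  - apply (@is_RInt_opp R_NormedModule).
    exact (@is_RInt_fct_extend_snd R_NormedModule R_NormedModule _ _ _ _ Hf).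
Qed.

Lemma RInt_Cminus (f g : R -> C) (a b : R) :
  @ex_RInt C_R_NormedModule f a b -> @ex_RInt C_R_NormedModule g a b ->
  RIntC (fun s => Cminus (f s) (g s)) a b = Cminus (RIntC f a b) (RIntC g a b).
Proof. exact (@RInt_minus C_R_CompleteNormedModule f g a b). Qed.

Lemma Cmod_RInt_le_pow (h : R -> C) (c : R) (m : nat) :
  0 <= c -> (forall s, @continuous R_UniformSpace C_R_NormedModule h s) ->
  (forall s, Cmod (h s) <= c * Rabs s ^ m) ->
  forall t, Cmod (RIntC h 0 t) <= c * Rabs t ^ S m / INR (S m).
Proof.
  intros Hc Hcont Hb t.
  assert (HS : 0 < INR (S m)) by (apply lt_0_INR; lia).
  assert (Hex : forall a b, @ex_RInt C_R_NormedModule h a b).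
  { intros a b. apply (@ex_RInt_continuous C_R_CompleteNormedModule). intros z _. apply Hcont. }
  destruct (Rle_or_lt 0 t) as [Ht | Ht].
  - rewrite (Rabs_pos_eq t) by lra. rewrite <- norm_C_R.
    apply (@norm_RInt_le C_R_NormedModule h (fun s => c * s ^ m) 0 t _ (c * t ^ S m / INR (S m))).
    + exact Ht.
    + intros x Hx. rewrite norm_C_R. rewrite <- (Rabs_pos_eq x) at 2 by lra. apply Hb.
    + apply (@RInt_correct C_R_CompleteNormedModule), Hex.
    + replace (c * t ^ S m / INR (S m)) with (c * t ^ S m / INR (S m) - c * 0 ^ S m / INR (S m))
        by (rewrite pow_i by lia; unfold Rdiv; ring).
      apply (is_RInt_derive (fun s => c * s ^ S m / INR (S m))).
      * intros x _. auto_derive; [trivial|].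
        change (match m with 0%nat => 1 | S _ => INR m + 1 end) with (INR (S m)). field. lra.
      * intros x _. apply (ex_derive_continuous (fun s => c * s ^ m)). auto_derive. trivial.
  - rewrite <- (@opp_RInt_swap C_R_CompleteNormedModule h t 0 (Hex t 0)).
    rewrite <- norm_C_R, (@norm_opp R_AbsRing C_R_NormedModule), Rabs_left by lra.
    apply (@norm_RInt_le C_R_NormedModule h (fun s => c * (- s) ^ m) t 0 _ (c * (- t) ^ S m / INR (S m))).
    + lra.
    + intros x Hx. rewrite norm_C_R. rewrite <- (Rabs_left1 x) by lra. apply Hb.
    + apply (@RInt_correct C_R_CompleteNormedModule), Hex.
    + replace (c * (- t) ^ S m / INR (S m))
        with (- c * (- 0) ^ S m / INR (S m) - (- c * (- t) ^ S m / INR (S m)))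
        by (simpl; unfold Rdiv; ring).
      apply (is_RInt_derive (fun s => - c * (- s) ^ S m / INR (S m))).
      * intros x _. auto_derive; [trivial|].
        change (match m with 0%nat => 1 | S _ => INR m + 1 end) with (INR (S m)). field. lra.
      * intros x _. apply (ex_derive_continuous (fun s => c * (- s) ^ m)). auto_derive. trivial.
Qed.

(** * Picard iteration for bounded Lipschitz fields *)

Lemma Rle_of_Rle_plus_lim0 (a c : R) (e : nat -> R) :
  (forall n, a <= c + e n) -> is_lim_seq e 0 -> a <= c.
Proof.
  intros H He.
  assert (Hlim : is_lim_seq (fun n => c + e n) (c + 0)).
  { apply is_lim_seq_plus'; [apply is_lim_seq_const | exact He]. }
  pose proof (is_lim_seq_le _ _ a (c + 0) H (is_lim_seq_const a) Hlim) as Hle.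
  simpl in Hle. lra.
Qed.

Lemma is_lim_seq_scal_0 (a : R) (e : nat -> R) :
  is_lim_seq e 0 -> is_lim_seq (fun n => a * e n) 0.
Proof.
  intros He. replace (Finite 0) with (Rbar_mult a 0) by (simpl; f_equal; ring).
  apply is_lim_seq_scal_l, He.
Qed.

Section Picard.

Variable I : Type.
Variable G : I -> R -> (I -> C) -> C.
Variable x0 : I -> C.
Variables B L K : R.
Hypothesis B_ge0 : 0 <= B.
Hypothesis L_ge0 : 0 <= L.
Hypothesis G_bounded : forall i s x, Cmod (G i s x) <= B.
Hypothesis G_lipschitz : forall i s x y d,
  (forall j, Cmod (Cminus (x j) (y j)) <= d) -> Cmod (Cminus (G i s x) (G i s y)) <= L * d.
Hypothesis G_time_lipschitz : forall i s s' x,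
  Cmod (Cminus (G i s x) (G i s' x)) <= K * Rabs (s - s').

Definition lipschitz_path (c : R) (x : R -> I -> C) : Prop :=
  forall j t t', Cmod (Cminus (x t j) (x t' j)) <= c * Rabs (t - t').

Lemma field_along_lipschitz (x : R -> I -> C) : lipschitz_path B x ->
  forall i s s', Cmod (Cminus (G i s (x s)) (G i s' (x s'))) <= (L * B + K) * Rabs (s - s').
Proof.
  intros Hx i s s'.
  pose proof (Cmod_minus_triangle (G i s (x s)) (G i s (x s')) (G i s' (x s'))).
  pose proof (G_lipschitz i s (x s) (x s') (B * Rabs (s - s')) (fun j => Hx j s s')).
  pose proof (G_time_lipschitz i s s' (x s')). nra.
Qed.

Lemma field_along_ex_RInt (x : R -> I -> C) : lipschitz_path B x ->
  forall i a b, @ex_RInt C_R_NormedModule (fun s => G i s (x s)) a b.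
Proof.
  intros Hx i a b. apply (@ex_RInt_continuous C_R_CompleteNormedModule). intros z _.
  apply (continuous_of_lipschitz _ (L * B + K)), field_along_lipschitz, Hx.
Qed.

Lemma field_along_minus_continuous (x y : R -> I -> C) : lipschitz_path B x -> lipschitz_path B y ->
  forall i s, @continuous R_UniformSpace C_R_NormedModule (fun s => Cminus (G i s (x s)) (G i s (y s))) s.
Proof.
  intros Hx Hy i. apply (continuous_of_lipschitz _ ((L * B + K) + (L * B + K))). intros s s'.
  pose proof (field_along_lipschitz x Hx i s s'). pose proof (field_along_lipschitz y Hy i s s').
  replace (Cminus (Cminus (G i s (x s)) (G i s (y s))) (Cminus (G i s' (x s')) (G i s' (y s'))))
    with (Cplus (Cminus (G i s (x s)) (G i s' (x s'))) (Copp (Cminus (G i s (y s)) (G i s' (y s'))))) by ring.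
  eapply Rle_trans; [apply Cmod_triangle|]. rewrite Cmod_opp. lra.
Qed.

Lemma integral_along_lipschitz (x : R -> I -> C) : lipschitz_path B x ->
  lipschitz_path B (fun t i => Cplus (x0 i) (RIntC (fun s => G i s (x s)) 0 t)).
Proof.
  intros Hx i t t'. pose proof (field_along_ex_RInt x Hx i) as He.
  set (g := fun s => G i s (x s)).
  assert (Hsplit : RIntC g 0 t = Cplus (RIntC g 0 t') (RIntC g t' t)).
  { symmetry. exact (@RInt_Chasles C_R_CompleteNormedModule g 0 t' t (He _ _) (He _ _)). }
  rewrite Hsplit.
  replace (Cminus (Cplus (x0 i) (Cplus (RIntC g 0 t') (RIntC g t' t))) (Cplus (x0 i) (RIntC g 0 t')))
    with (RIntC g t' t) by Cring.
  unfold g.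
  rewrite <- norm_C_R, Rmult_comm.
  apply (@norm_RInt_le_const_abs C_R_NormedModule (fun s => G i s (x s)) t' t).
  - intros z _. rewrite norm_C_R. apply G_bounded.
  - apply (@RInt_correct C_R_CompleteNormedModule), He.
Qed.

Fixpoint picard (n : nat) : R -> I -> C :=
  match n with
  | O => fun _ => x0
  | S m => fun t i => Cplus (x0 i) (RIntC (fun s => G i s (picard m s)) 0 t)
  end.

Lemma picard_lipschitz n : lipschitz_path B (picard n).
Proof.
  induction n as [|n IH].
  - intros j t t'. simpl. replace (Cminus (x0 j) (x0 j)) with (RtoC 0) by ring.
    rewrite Cmod_0. pose proof (Rabs_pos (t - t')). nra.
  - apply integral_along_lipschitz, IH.
Qed.

Definition picard_increment (n : nat) (t : R) (i : I) : C :=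
  Cminus (picard (S n) t i) (picard n t i).

Definition increment_bound (n : nat) (t : R) : R :=
  B * L ^ n * Rabs t ^ S n / INR (fact (S n)).

Lemma increment_bound_ge0 n t : 0 <= increment_bound n t.
Proof.
  unfold increment_bound. pose proof (pow_le L n L_ge0). pose proof (pow_le _ (S n) (Rabs_pos t)).
  pose proof (INR_fact_lt_0 (S n)). apply Rdiv_le_0_compat; [|lra]. apply Rmult_le_pos; [apply Rmult_le_pos|]; assumption.
Qed.

Lemma Cmod_picard_increment_le n : forall i t,
  Cmod (picard_increment n t i) <= increment_bound n t.
Proof.
  induction n as [|n IH]; intros i t; unfold picard_increment.
  - simpl picard. replace (Cminus (Cplus (x0 i) (RIntC (fun s => G i s x0) 0 t)) (x0 i))
      with (RIntC (fun s => G i s x0) 0 t) by Cring.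
    rewrite <- norm_C_R. eapply Rle_trans.
    { apply (@norm_RInt_le_const_abs C_R_NormedModule (fun s => G i s x0) 0 t _ B).
      - intros z _. rewrite norm_C_R. apply G_bounded.
      - apply (@RInt_correct C_R_CompleteNormedModule).
        exact (field_along_ex_RInt _ (picard_lipschitz 0) i 0 t). }
    unfold increment_bound. simpl. rewrite Rminus_0_r. lra.
  - set (g k s := G i s (picard k s)).
    change (Cmod (Cminus (Cplus (x0 i) (RIntC (g (S n)) 0 t)) (Cplus (x0 i) (RIntC (g n) 0 t)))
      <= increment_bound (S n) t).
    replace (Cminus (Cplus (x0 i) (RIntC (g (S n)) 0 t)) (Cplus (x0 i) (RIntC (g n) 0 t)))
      with (Cminus (RIntC (g (S n)) 0 t) (RIntC (g n) 0 t)) by Cring.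
    rewrite <- RInt_Cminus by apply field_along_ex_RInt, picard_lipschitz.
    set (c := L * (B * L ^ n / INR (fact (S n)))).
    assert (Hc : 0 <= c).
    { pose proof (pow_le L n L_ge0). pose proof (INR_fact_lt_0 (S n)).
      unfold c. apply Rmult_le_pos; [lra|]. apply Rdiv_le_0_compat; [nra | lra]. }
    eapply Rle_trans.
    { apply (Cmod_RInt_le_pow _ c (S n) Hc).
      - apply field_along_minus_continuous; apply picard_lipschitz.
      - intros s. eapply Rle_trans; [apply (G_lipschitz i s _ _ (increment_bound n s)); intros j; apply IH|].
        unfold increment_bound, c. right. field. apply not_0_INR, fact_neq_0. }
    unfold increment_bound, c. right. rewrite (fact_simpl (S n)), mult_INR. simpl pow.
    field. split; [apply not_0_INR, fact_neq_0 | apply not_0_INR; lia].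
Qed.

Lemma ex_series_increment_bound t : ex_series (fun n => increment_bound n t).
Proof.
  apply (@ex_series_le R_AbsRing R_CompleteNormedModule _
           (fun n => B * Rabs t * ((L * Rabs t) ^ n / INR (fact n)))).
  - intros n. change (Rabs (increment_bound n t) <= B * Rabs t * ((L * Rabs t) ^ n / INR (fact n))).
    rewrite Rabs_pos_eq by apply increment_bound_ge0.
    unfold increment_bound. rewrite Rpow_mult_distr. simpl pow.
    pose proof (INR_fact_lt_0 n). pose proof (pow_le L n L_ge0). pose proof (pow_le _ n (Rabs_pos t)).
    assert (Hfact : INR (fact n) <= INR (fact (S n))) by (apply le_INR; rewrite fact_simpl; lia).
    replace (B * Rabs t * (L ^ n * Rabs t ^ n / INR (fact n)))
      with (B * L ^ n * (Rabs t * Rabs t ^ n) / INR (fact n)) by (field; lra).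
    apply Rmult_le_compat_l; [repeat apply Rmult_le_pos; auto using Rabs_pos |].
    apply Rinv_le_contravar; lra.
  - assert (Hexp : ex_series (fun n => (L * Rabs t) ^ n / INR (fact n))).
    { eexists. eapply is_series_ext; [|exact (is_exp_Reals (L * Rabs t))].
      intros n. simpl. rewrite pow_n_pow. unfold scal; simpl. unfold mult; simpl. unfold Rdiv. ring. }
    exact (ex_series_scal_l (B * Rabs t) _ Hexp).
Qed.

Definition picard_limit (t : R) (i : I) : C :=
  (fst (x0 i) + Series (fun n => fst (picard_increment n t i)),
   snd (x0 i) + Series (fun n => snd (picard_increment n t i))).

Definition increment_tail (n : nat) (t : R) : R := Series (fun k => increment_bound (S n + k) t).

Lemma fst_picard n t i :
  fst (picard (S n) t i) = fst (x0 i) + sum_n (fun k => fst (picard_increment k t i)) n.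
Proof.
  induction n as [|n IH].
  - rewrite sum_O. unfold picard_increment. simpl. ring.
  - rewrite sum_Sn, <- Rplus_assoc, <- IH. unfold picard_increment. simpl fst. unfold plus. simpl. ring.
Qed.

Lemma snd_picard n t i :
  snd (picard (S n) t i) = snd (x0 i) + sum_n (fun k => snd (picard_increment k t i)) n.
Proof.
  induction n as [|n IH].
  - rewrite sum_O. unfold picard_increment. simpl. ring.
  - rewrite sum_Sn, <- Rplus_assoc, <- IH. unfold picard_increment. simpl snd. unfold plus. simpl. ring.
Qed.

Lemma Rabs_Series_minus_sum_le (a : nat -> R) t n :
  (forall k, Rabs (a k) <= increment_bound k t) ->
  Rabs (Series a - sum_n a n) <= increment_tail n t.
Proof.
  intros Ha.
  assert (Hex : ex_series a).
  { apply (@ex_series_le R_AbsRing R_CompleteNormedModule _ (fun k => increment_bound k t)).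
    - exact Ha.
    - apply ex_series_increment_bound. }
  assert (Hb : ex_series (fun k => increment_bound (S n + k) t)).
  { exact (proj1 (ex_series_incr_n _ (S n)) (ex_series_increment_bound t)). }
  rewrite (Series_incr_n a (S n)) by (lia || exact Hex).
  rewrite sum_n_Reals. simpl pred.
  replace (sum_f_R0 a n + Series (fun k => a (S n + k)%nat) - sum_f_R0 a n)
    with (Series (fun k => a (S n + k)%nat)) by ring.
  eapply Rle_trans; [apply Series_Rabs|].
  - apply (@ex_series_le R_AbsRing R_CompleteNormedModule _ (fun k => increment_bound (S n + k) t)); [|exact Hb].
    intros k. change (Rabs (Rabs (a (S n + k)%nat)) <= increment_bound (S n + k) t).
    rewrite Rabs_Rabsolu. apply Ha.
  - apply Series_le; [|exact Hb]. intros k. split; [apply Rabs_pos | apply Ha].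
Qed.

Lemma picard_limit_close n t i :
  Cmod (Cminus (picard_limit t i) (picard (S n) t i)) <= 2 * increment_tail n t.
Proof.
  eapply Rle_trans; [apply Cmod_le_Rabs_sum|].
  assert (Hfst : fst (Cminus (picard_limit t i) (picard (S n) t i))
                 = Series (fun k => fst (picard_increment k t i))
                   - sum_n (fun k => fst (picard_increment k t i)) n).
  { rewrite fst_Cminus, fst_picard. unfold picard_limit. cbn [fst]. ring. }
  assert (Hsnd : snd (Cminus (picard_limit t i) (picard (S n) t i))
                 = Series (fun k => snd (picard_increment k t i))
                   - sum_n (fun k => snd (picard_increment k t i)) n).
  { rewrite snd_Cminus, snd_picard. unfold picard_limit. cbn [snd]. ring. }
  rewrite Hfst, Hsnd.
  pose proof (Rabs_Series_minus_sum_le (fun k => fst (picard_increment k t i)) t n) as H1.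
  pose proof (Rabs_Series_minus_sum_le (fun k => snd (picard_increment k t i)) t n) as H2.
  assert (Rabs (Series (fun k => fst (picard_increment k t i))
                - sum_n (fun k => fst (picard_increment k t i)) n) <= increment_tail n t).
  { apply H1. intros k. eapply Rle_trans; [apply re_le_Cmod | apply Cmod_picard_increment_le]. }
  assert (Rabs (Series (fun k => snd (picard_increment k t i))
                - sum_n (fun k => snd (picard_increment k t i)) n) <= increment_tail n t).
  { apply H2. intros k. eapply Rle_trans; [apply Rabs_snd_le_Cmod | apply Cmod_picard_increment_le]. }
  lra.
Qed.

Lemma increment_tail_mono n t T : Rabs t <= T -> increment_tail n t <= increment_tail n T.
Proof.
  intros H. unfold increment_tail. apply Series_le.
  - intros k. split; [apply increment_bound_ge0|]. unfold increment_bound.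
    apply Rmult_le_compat_r; [apply Rlt_le, Rinv_0_lt_compat, INR_fact_lt_0|].
    apply Rmult_le_compat_l; [apply Rmult_le_pos; [lra | apply pow_le; lra]|].
    apply pow_incr. split; [apply Rabs_pos|].
    rewrite (Rabs_pos_eq T); [exact H | pose proof (Rabs_pos t); lra].
  - exact (proj1 (ex_series_incr_n _ (S n)) (ex_series_increment_bound T)).
Qed.

Lemma increment_tail_lim T : is_lim_seq (fun n => increment_tail n T) 0.
Proof.
  apply is_lim_seq_ext
    with (fun n => Series (fun k => increment_bound k T) - sum_n (fun k => increment_bound k T) n).
  - intros n. rewrite (Series_incr_n _ (S n)) by (lia || apply ex_series_increment_bound).
    rewrite sum_n_Reals. simpl pred. unfold increment_tail. ring.
  - replace 0 with (Series (fun k => increment_bound k T) - Series (fun k => increment_bound k T)) by ring.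
    apply is_lim_seq_minus'; [apply is_lim_seq_const|].
    exact (Series_correct _ (ex_series_increment_bound T)).
Qed.

Lemma picard_limit_eq_from_2 t i z (e : nat -> R) : is_lim_seq e 0 ->
  (forall n, Cmod (Cminus (picard (S (S n)) t i) z) <= e n) -> picard_limit t i = z.
Proof.
  intros He H. apply Cmod_minus_le_0.
  apply (Rle_of_Rle_plus_lim0 _ 0 (fun n => 2 * increment_tail (S n) t + e n)).
  - intros n. pose proof (Cmod_minus_triangle (picard_limit t i) (picard (S (S n)) t i) z).
    pose proof (picard_limit_close (S n) t i). specialize (H n). lra.
  - replace 0 with (0 + 0) by ring. apply is_lim_seq_plus'; [|exact He].
    apply is_lim_seq_scal_0, (is_lim_seq_incr_1 (fun n => increment_tail n t)), increment_tail_lim.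
Qed.

Lemma picard_limit_eq t i z (e : nat -> R) : is_lim_seq e 0 ->
  (forall n, Cmod (Cminus (picard (S n) t i) z) <= e n) -> picard_limit t i = z.
Proof.
  intros He H. apply (picard_limit_eq_from_2 t i z (fun n => e (S n))).
  - exact (proj1 (is_lim_seq_incr_1 e 0) He).
  - intros n. apply H.
Qed.

Lemma picard_limit_lipschitz : lipschitz_path B picard_limit.
Proof.
  intros j t t'. set (T := Rmax (Rabs t) (Rabs t')).
  apply (Rle_of_Rle_plus_lim0 _ _ (fun n => 4 * increment_tail n T)).
  - intros n.
    pose proof (Cmod_minus_triangle (picard_limit t j) (picard (S n) t j) (picard_limit t' j)).
    pose proof (Cmod_minus_triangle (picard (S n) t j) (picard (S n) t' j) (picard_limit t' j)).
    pose proof (picard_limit_close n t j).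
    pose proof (picard_limit_close n t' j) as Hclose'. rewrite Cmod_minus_sym in Hclose'.
    pose proof (picard_lipschitz (S n) j t t').
    pose proof (increment_tail_mono n t T (Rmax_l _ _)).
    pose proof (increment_tail_mono n t' T (Rmax_r _ _)). lra.
  - apply is_lim_seq_scal_0, increment_tail_lim.
Qed.

Lemma picard_limit_integral_eq t i :
  picard_limit t i = Cplus (x0 i) (RIntC (fun s => G i s (picard_limit s)) 0 t).
Proof.
  apply (picard_limit_eq_from_2 t i _ (fun n => Rabs t * (L * (2 * increment_tail n (Rabs t))))).
  { apply is_lim_seq_ext with (fun n => Rabs t * L * 2 * increment_tail n (Rabs t)); [intros n; ring|].
    apply is_lim_seq_scal_0, increment_tail_lim. }
  intros n. set (g x s := G i s (x s)).
  change (Cmod (Cminus (Cplus (x0 i) (RIntC (g (picard (S n))) 0 t))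
                       (Cplus (x0 i) (RIntC (g picard_limit) 0 t)))
          <= Rabs t * (L * (2 * increment_tail n (Rabs t)))).
  replace (Cminus (Cplus (x0 i) (RIntC (g (picard (S n))) 0 t)) (Cplus (x0 i) (RIntC (g picard_limit) 0 t)))
    with (Cminus (RIntC (g (picard (S n))) 0 t) (RIntC (g picard_limit) 0 t)) by Cring.
  rewrite <- RInt_Cminus by (apply field_along_ex_RInt; apply picard_lipschitz || apply picard_limit_lipschitz).
  rewrite <- norm_C_R. replace (Rabs t) with (Rabs (t - 0)) at 1 by (f_equal; ring).
  apply (@norm_RInt_le_const_abs C_R_NormedModule
           (fun s => Cminus (g (picard (S n)) s) (g picard_limit s)) 0 t).
  - intros s Hs. rewrite norm_C_R. apply G_lipschitz. intros j.
    rewrite Cmod_minus_sym. eapply Rle_trans; [apply picard_limit_close|].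
    apply Rmult_le_compat_l; [lra|]. apply increment_tail_mono.
    unfold Rmin, Rmax in Hs. destruct (Rle_dec 0 t).
    + rewrite !Rabs_pos_eq by lra. lra.
    + rewrite (Rabs_left t) by lra. unfold Rabs. destruct (Rcase_abs s); lra.
  - apply (@RInt_correct C_R_CompleteNormedModule), (@ex_RInt_continuous C_R_CompleteNormedModule).
    intros z _. apply field_along_minus_continuous; [apply picard_lipschitz | apply picard_limit_lipschitz].
Qed.

Lemma is_derive_picard_limit t i :
  is_derive (fun s => picard_limit s i) t (G i t (picard_limit t)).
Proof.
  set (g s := G i s (picard_limit s)).
  apply is_derive_ext with (fun s => @plus C_R_NormedModule (x0 i) (RIntC g 0 s)).
  { intros s. symmetry. apply picard_limit_integral_eq. }
  change (G i t (picard_limit t)) with (g t).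
  replace (g t) with (@plus C_R_NormedModule zero (g t)) by apply plus_zero_l.
  apply (@is_derive_plus R_AbsRing C_R_NormedModule); [apply is_derive_const|].
  apply (@is_derive_RInt C_R_NormedModule g _ 0).
  - apply filter_forall. intros b. apply (@RInt_correct C_R_CompleteNormedModule).
    exact (field_along_ex_RInt _ picard_limit_lipschitz i 0 b).
  - exact (continuous_of_lipschitz _ _ (field_along_lipschitz _ picard_limit_lipschitz i) t).
Qed.

Lemma picard_limit_0 : picard_limit 0 = x0.
Proof.
  apply functional_extensionality. intros i.
  apply (picard_limit_eq 0 i (x0 i) (fun _ => 0)); [apply is_lim_seq_const|].
  intros n. simpl picard.
  replace (RIntC (fun s => G i s (picard n s)) 0 0) with (RtoC 0) by (symmetry; exact (@RInt_point C_R_CompleteNormedModule 0 _)).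
  replace (Cminus (Cplus (x0 i) (RtoC 0)) (x0 i)) with (RtoC 0) by Cring. rewrite Cmod_0. lra.
Qed.

Lemma picard_limit_frozen i :
  (forall s x, G i s x = RtoC 0) -> forall t, picard_limit t i = x0 i.
Proof.
  intros HG t. apply (picard_limit_eq t i (x0 i) (fun _ => 0)); [apply is_lim_seq_const|].
  intros n. simpl picard.
  rewrite (@RInt_ext C_R_CompleteNormedModule _ (fun _ => RtoC 0)) by (intros; apply HG).
  replace (RIntC (fun _ => RtoC 0) 0 t) with (RtoC 0)
    by (symmetry; rewrite (@RInt_const C_R_CompleteNormedModule);
        exact (@scal_zero_r R_AbsRing C_R_CompleteNormedModule _)).
  replace (Cminus (Cplus (x0 i) (RtoC 0)) (x0 i)) with (RtoC 0) by Cring. rewrite Cmod_0. lra.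
Qed.

Variable conj_index : I -> I.
Hypothesis G_conj : forall i s x, (forall j, x (conj_index j) = Cconj (x j)) ->
  G (conj_index i) s x = Cconj (G i s x).
Hypothesis x0_conj : forall j, x0 (conj_index j) = Cconj (x0 j).

Lemma picard_conj n t j : picard n t (conj_index j) = Cconj (picard n t j).
Proof.
  revert t j. induction n as [|n IH]; intros t j; [apply x0_conj|]. simpl picard.
  rewrite (@RInt_ext C_R_CompleteNormedModule _ (fun s => Cconj (G j s (picard n s))))
    by (intros s _; apply G_conj; intros k; apply IH).
  rewrite RInt_Cconj by exact (field_along_ex_RInt _ (picard_lipschitz n) j 0 t).
  rewrite x0_conj, Cplus_conj. reflexivity.
Qed.

Lemma picard_limit_conj t j : picard_limit t (conj_index j) = Cconj (picard_limit t j).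
Proof.
  apply (picard_limit_eq t (conj_index j) _ (fun n => 2 * increment_tail n t)).
  - apply is_lim_seq_scal_0, increment_tail_lim.
  - intros n. rewrite picard_conj, <- Cminus_conj, Cmod_conj, Cmod_minus_sym. apply picard_limit_close.
Qed.

End Picard.

Theorem bounded_lipschitz_ode_global (I : Type) (G : I -> R -> (I -> C) -> C) (x0 : I -> C)
  (B L K : R) (conj_index : I -> I) :
  0 <= B -> 0 <= L ->
  (forall i s x, Cmod (G i s x) <= B) ->
  (forall i s x y d, (forall j, Cmod (Cminus (x j) (y j)) <= d) ->
     Cmod (Cminus (G i s x) (G i s y)) <= L * d) ->
  (forall i s s' x, Cmod (Cminus (G i s x) (G i s' x)) <= K * Rabs (s - s')) ->
  (forall i s x, (forall j, x (conj_index j) = Cconj (x j)) ->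
     G (conj_index i) s x = Cconj (G i s x)) ->
  (forall j, x0 (conj_index j) = Cconj (x0 j)) ->
  exists X : R -> I -> C,
    X 0 = x0 /\
    (forall t i, is_derive (fun s => X s i) t (G i t (X t))) /\
    (forall t j, X t (conj_index j) = Cconj (X t j)) /\
    (forall i, (forall s x, G i s x = RtoC 0) -> forall t, X t i = x0 i).
Proof.
  intros HB HL Hbd Hlip Htime Hconj Hx0. exists (picard_limit I G x0).
  split; [|split; [|split]].
  - exact (picard_limit_0 I G x0 B L K HB HL Hbd Hlip Htime).
  - exact (is_derive_picard_limit I G x0 B L K HB HL Hbd Hlip Htime).
  - exact (picard_limit_conj I G x0 B L K HB HL Hbd Hlip Htime conj_index Hconj Hx0).
  - exact (picard_limit_frozen I G x0 B L K HB HL Hbd Hlip Htime).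
Qed.

Lemma sum_n_shift_l {G : AbelianMonoid} (a : nat -> G) n :
  sum_n a (S n) = plus (a O) (sum_n (fun j => a (S j)) n).
Proof.
  unfold sum_n. rewrite (sum_n_m_Chasles a 0 0 (S n)) by lia.
  rewrite sum_n_n, <- sum_n_m_S. reflexivity.
Qed.

Lemma sum_n_rev {G : AbelianMonoid} n (a : nat -> G) :
  sum_n a n = sum_n (fun j => a (n - j)%nat) n.
Proof.
  revert a. induction n as [|n IH]; intros a; [reflexivity|].
  rewrite sum_n_shift_l, sum_Sn, Nat.sub_diag, (IH (fun j => a (S j))), plus_comm.
  f_equal. apply sum_n_ext_loc. intros j Hj. f_equal. lia.
Qed.

Lemma sum_n_ge0 (f : nat -> R) n : (forall j, 0 <= f j) -> 0 <= sum_n f n.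
Proof. intros Hf. rewrite sum_n_Reals. apply cond_pos_sum. exact Hf. Qed.

Lemma sum_n_ge_term (f : nat -> R) n k : (forall j, 0 <= f j) -> (k <= n)%nat -> f k <= sum_n f n.
Proof.
  intros Hf Hk. induction n as [|n IH].
  - replace k with O by lia. rewrite sum_O. lra.
  - rewrite sum_Sn. change (f k <= sum_n f n + f (S n)).
    destruct (Nat.eq_dec k (S n)) as [-> | Hne].
    + pose proof (sum_n_ge0 f n Hf). lra.
    + pose proof (Hf (S n)). assert (f k <= sum_n f n) by (apply IH; lia). lra.
Qed.

Lemma Cmod_sum_n_le (f : nat -> C) n c :
  (forall j, (j <= n)%nat -> Cmod (f j) <= c) -> Cmod (sum_n f n) <= INR (S n) * c.
Proof.
  intros H. rewrite <- sum_n_const.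
  induction n as [|n IH].
  - rewrite !sum_O. apply H. lia.
  - rewrite !sum_Sn. change (Cmod (Cplus (sum_n f n) (f (S n))) <= sum_n (fun _ => c) n + c).
    eapply Rle_trans; [apply Cmod_triangle|].
    pose proof (H (S n) (le_n _)). assert (Cmod (sum_n f n) <= sum_n (fun _ => c) n) by (apply IH; auto).
    lra.
Qed.

Lemma sum_n_Cplus (f g : nat -> C) n :
  sum_n (fun j => Cplus (f j) (g j)) n = Cplus (sum_n f n) (sum_n g n).
Proof. exact (sum_n_plus f g n). Qed.

Lemma sum_n_Cmult_l (a : C) (f : nat -> C) n :
  sum_n (fun j => Cmult a (f j)) n = Cmult a (sum_n f n).
Proof.
  induction n as [|n IH]; [rewrite !sum_O; reflexivity|].
  rewrite !sum_Sn, IH. change (Cplus (Cmult a (sum_n f n)) (Cmult a (f (S n)))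
                               = Cmult a (Cplus (sum_n f n) (f (S n)))). ring.
Qed.

Lemma sum_n_Cminus (f g : nat -> C) n :
  sum_n (fun j => Cminus (f j) (g j)) n = Cminus (sum_n f n) (sum_n g n).
Proof.
  induction n as [|n IH]; [rewrite !sum_O; reflexivity|].
  rewrite !sum_Sn, IH. change (Cplus (Cminus (sum_n f n) (sum_n g n)) (Cminus (f (S n)) (g (S n)))
    = Cminus (Cplus (sum_n f n) (f (S n))) (Cplus (sum_n g n) (g (S n)))). ring.
Qed.

Lemma sum_n_Cconj (f : nat -> C) n : Cconj (sum_n f n) = sum_n (fun j => Cconj (f j)) n.
Proof.
  induction n as [|n IH]; [rewrite !sum_O; reflexivity|].
  rewrite !sum_Sn. exact (eq_trans (Cplus_conj _ _) (f_equal (fun z => Cplus z _) IH)).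
Qed.

Lemma fst_sum_n (f : nat -> C) n : fst (sum_n f n) = sum_n (fun j => fst (f j)) n.
Proof.
  induction n as [|n IH]; [rewrite !sum_O; reflexivity|].
  rewrite !sum_Sn, <- IH. reflexivity.
Qed.

Definition clampR (M a : R) : R := Rmax (- M) (Rmin M a).
Definition clampC (M : R) (z : C) : C := (clampR M (fst z), clampR M (snd z)).

Lemma clampR_lipschitz M a b : 0 <= M -> Rabs (clampR M a - clampR M b) <= Rabs (a - b).
Proof.
  intros HM. unfold clampR, Rmax, Rmin.
  repeat destruct (Rle_dec _ _); unfold Rabs; repeat destruct (Rcase_abs _); lra.
Qed.

Lemma Rabs_clampR_le M a : 0 <= M -> Rabs (clampR M a) <= M.
Proof.
  intros HM. unfold clampR, Rmax, Rmin.
  repeat destruct (Rle_dec _ _); unfold Rabs; repeat destruct (Rcase_abs _); lra.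
Qed.

Lemma clampR_opp M a : 0 <= M -> clampR M (- a) = - clampR M a.
Proof. intros HM. unfold clampR, Rmax, Rmin. repeat destruct (Rle_dec _ _); lra. Qed.

Lemma clampR_id M a : Rabs a <= M -> clampR M a = a.
Proof.
  intros H. unfold clampR, Rmax, Rmin. unfold Rabs in H.
  destruct (Rcase_abs a); repeat destruct (Rle_dec _ _); lra.
Qed.

Lemma Cmod_clampC_le M z : 0 <= M -> Cmod (clampC M z) <= 2 * M.
Proof.
  intros HM. eapply Rle_trans; [apply Cmod_le_Rabs_sum|]. simpl.
  pose proof (Rabs_clampR_le M (fst z) HM). pose proof (Rabs_clampR_le M (snd z) HM). lra.
Qed.

Lemma clampC_lipschitz M z w : 0 <= M ->
  Cmod (Cminus (clampC M z) (clampC M w)) <= 2 * Cmod (Cminus z w).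
Proof.
  intros HM. eapply Rle_trans; [apply Cmod_le_Rabs_sum|].
  pose proof (re_le_Cmod (Cminus z w)) as Hre. pose proof (Rabs_snd_le_Cmod (Cminus z w)) as Him.
  unfold Re in Hre. rewrite fst_Cminus in Hre |- *. rewrite snd_Cminus in Him |- *. simpl.
  pose proof (clampR_lipschitz M (fst z) (fst w) HM).
  pose proof (clampR_lipschitz M (snd z) (snd w) HM). lra.
Qed.

Lemma clampC_conj M z : 0 <= M -> clampC M (Cconj z) = Cconj (clampC M z).
Proof. intros HM. destruct z as [a b]. unfold clampC, Cconj. simpl. now rewrite clampR_opp. Qed.

Lemma cexpi_lipschitz a b : Cmod (Cminus (cexpi a) (cexpi b)) <= 2 * Rabs (a - b).
Proof.
  destruct (MVT_abs cos (fun x => - sin x) b a) as [c [Hcos _]].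
  { intros c _. apply derivable_pt_lim_cos. }
  destruct (MVT_abs sin cos b a) as [c' [Hsin _]].
  { intros c' _. apply derivable_pt_lim_sin. }
  rewrite Rabs_Ropp in Hcos.
  pose proof (Rabs_le _ 1 (SIN_bound c)). pose proof (Rabs_le _ 1 (COS_bound c')).
  pose proof (Rabs_pos (a - b)).
  eapply Rle_trans; [apply Cmod_le_Rabs_sum|]. rewrite fst_Cminus, snd_Cminus. unfold cexpi; simpl.
  nra.
Qed.

Lemma Cmod_cexpi a : Cmod (cexpi a) = 1.
Proof.
  unfold cexpi, Cmod. simpl. replace (cos a * (cos a * 1) + sin a * (sin a * 1)) with 1; [apply sqrt_1|].
  pose proof (sin2_cos2 a). unfold Rsqr in *. lra.
Qed.

Lemma cexpi_opp a : cexpi (- a) = Cconj (cexpi a).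
Proof. unfold cexpi, Cconj. simpl. now rewrite cos_neg, sin_neg. Qed.

(** * Estimates on the Galerkin nonlinearity *)

Definition galerkin_bracket (N : nat) (t : R) (a b c d : fourier) (k : Z) : C :=
  if (Z.abs k <=? Z.of_nat N)%Z then
    Cmult (Cmult (Cmult (RtoC (/2)) Ci) (RtoC (IZR k))) (Cminus (conv N t k a b) (conv N t k c d))
  else RtoC 0.

Lemma rhs_u_bracket N t u v k :
  rhs_u N t u v k = galerkin_bracket N t (proj N u) (proj N v) (proj N u) (proj N u) k.
Proof. reflexivity. Qed.

Lemma rhs_v_bracket N t u v k :
  rhs_v N t u v k = galerkin_bracket N t (proj N u) (proj N v) (proj N v) (proj N v) k.
Proof. reflexivity. Qed.

Lemma Rabs_IZR_le (k : Z) (N : nat) : (Z.abs k <= Z.of_nat N)%Z -> Rabs (IZR k) <= INR N.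
Proof. intros H. rewrite <- abs_IZR, INR_IZR_INZ. apply IZR_le, H. Qed.

Lemma Cmod_bracket_minus_le N t t' (a b c d a' b' c' d' : fourier) k X : 0 <= X ->
  ((Z.abs k <= Z.of_nat N)%Z ->
   Cmod (Cminus (Cminus (conv N t k a b) (conv N t k c d)) (Cminus (conv N t' k a' b') (conv N t' k c' d')))
   <= 2 * X) ->
  Cmod (Cminus (galerkin_bracket N t a b c d k) (galerkin_bracket N t' a' b' c' d' k)) <= INR N * X.
Proof.
  intros HX H. pose proof (pos_INR N). unfold galerkin_bracket.
  destruct (Z.leb_spec (Z.abs k) (Z.of_nat N)) as [Hk | Hk].
  - set (w := Cmult (Cmult (RtoC (/2)) Ci) (RtoC (IZR k))).
    replace (Cminus (Cmult w _) (Cmult w _)) with (Cmult w (Cminus (Cminus (conv N t k a b) (conv N t k c d))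
      (Cminus (conv N t' k a' b') (conv N t' k c' d')))) by ring.
    assert (Hw : Cmod w <= INR N / 2).
    { unfold w. rewrite !Cmod_mult, Cmod_Ci, !Cmod_R. pose proof (Rabs_IZR_le k N Hk).
      rewrite Rabs_pos_eq by lra. lra. }
    rewrite Cmod_mult. specialize (H Hk).
    pose proof (Cmod_ge_0 w). pose proof (Cmod_ge_0 (Cminus (Cminus (conv N t k a b) (conv N t k c d))
      (Cminus (conv N t' k a' b') (conv N t' k c' d')))). nra.
  - replace (Cminus (RtoC 0) (RtoC 0)) with (RtoC 0) by ring. rewrite Cmod_0. nra.
Qed.

Lemma Cmod_bracket_le N t (a b c d : fourier) k X : 0 <= X ->
  ((Z.abs k <= Z.of_nat N)%Z -> Cmod (conv N t k a b) <= X /\ Cmod (conv N t k c d) <= X) ->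
  Cmod (galerkin_bracket N t a b c d k) <= INR N * X.
Proof.
  intros HX H. pose proof (pos_INR N). unfold galerkin_bracket.
  destruct (Z.leb_spec (Z.abs k) (Z.of_nat N)) as [Hk | Hk].
  - rewrite Cmod_mult, !Cmod_mult, Cmod_Ci, !Cmod_R. pose proof (Rabs_IZR_le k N Hk).
    rewrite (Rabs_pos_eq (/2)) by lra. destruct (H Hk) as [Hab Hcd].
    assert (Cmod (Cminus (conv N t k a b) (conv N t k c d)) <= 2 * X).
    { unfold Cminus. eapply Rle_trans; [apply Cmod_triangle|]. rewrite Cmod_opp. lra. }
    pose proof (Rabs_pos (IZR k)). pose proof (Cmod_ge_0 (Cminus (conv N t k a b) (conv N t k c d))).
    nra.
  - rewrite Cmod_0. nra.
Qed.

Lemma Cmod_conv_le N t k (a b : fourier) M :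
  (forall j, Cmod (a j) <= M) -> (forall j, Cmod (b j) <= M) ->
  Cmod (conv N t k a b) <= INR (S (2 * N)) * (M * M).
Proof.
  intros Ha Hb. apply Cmod_sum_n_le. intros j _.
  rewrite !Cmod_mult, Cmod_cexpi, Rmult_1_l.
  apply Rmult_le_compat; auto using Cmod_ge_0.
Qed.

Lemma Cmod_conv_minus_le N t k (a b a' b' : fourier) M d :
  (forall j, Cmod (a j) <= M) -> (forall j, Cmod (b' j) <= M) ->
  (forall j, Cmod (Cminus (a j) (a' j)) <= d) -> (forall j, Cmod (Cminus (b j) (b' j)) <= d) ->
  Cmod (Cminus (conv N t k a b) (conv N t k a' b')) <= INR (S (2 * N)) * (2 * M * d).
Proof.
  intros Ha Hb' Hda Hdb. unfold conv. rewrite <- sum_n_Cminus. apply Cmod_sum_n_le. intros j _.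
  set (k1 := (Z.of_nat j - Z.of_nat N)%Z). set (e := cexpi _).
  replace (Cminus (Cmult e (Cmult (a k1) (b (k - k1)%Z))) (Cmult e (Cmult (a' k1) (b' (k - k1)%Z))))
    with (Cmult e (Cplus (Cmult (a k1) (Cminus (b (k - k1)%Z) (b' (k - k1)%Z)))
                         (Cmult (Cminus (a k1) (a' k1)) (b' (k - k1)%Z)))) by ring.
  rewrite Cmod_mult. unfold e. rewrite Cmod_cexpi, Rmult_1_l.
  eapply Rle_trans; [apply Cmod_triangle|]. rewrite !Cmod_mult.
  specialize (Ha k1). specialize (Hb' (k - k1)%Z). specialize (Hda k1). specialize (Hdb (k - k1)%Z).
  pose proof (Cmod_ge_0 (a k1)). pose proof (Cmod_ge_0 (b' (k - k1)%Z)).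
  pose proof (Cmod_ge_0 (Cminus (a k1) (a' k1))).
  pose proof (Cmod_ge_0 (Cminus (b (k - k1)%Z) (b' (k - k1)%Z))). nra.
Qed.

(* The frequencies 3 k k1 (k - k1) are at most 3 N N (2 N) = 6 N^3, and [cexpi] is 2-Lipschitz. *)
Lemma Cmod_conv_time_minus_le N s s' k (a b : fourier) M : (Z.abs k <= Z.of_nat N)%Z ->
  (forall j, Cmod (a j) <= M) -> (forall j, Cmod (b j) <= M) ->
  Cmod (Cminus (conv N s k a b) (conv N s' k a b))
    <= INR (S (2 * N)) * (12 * INR N ^ 3 * (M * M) * Rabs (s - s')).
Proof.
  intros Hk Ha Hb. unfold conv. rewrite <- sum_n_Cminus. apply Cmod_sum_n_le. intros j Hj.
  set (k1 := (Z.of_nat j - Z.of_nat N)%Z).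
  pose proof (Rabs_IZR_le k N Hk).
  pose proof (Rabs_IZR_le k1 N ltac:(unfold k1; lia)).
  pose proof (Rabs_IZR_le (k - k1) (2 * N) ltac:(unfold k1; lia)) as Hk2.
  rewrite mult_INR in Hk2. simpl (INR 2) in Hk2.
  set (th := 3 * IZR k * IZR k1 * IZR (k - k1)).
  assert (Hth : Rabs th <= 6 * INR N ^ 3).
  { unfold th. rewrite !Rabs_mult, (Rabs_pos_eq 3) by lra.
    pose proof (Rabs_pos (IZR k)). pose proof (Rabs_pos (IZR k1)). pose proof (Rabs_pos (IZR (k - k1))).
    replace (6 * INR N ^ 3) with (3 * INR N * INR N * (2 * INR N)) by ring.
    apply Rmult_le_compat; try nra. }
  replace (Cminus (Cmult (cexpi (th * s)) (Cmult (a k1) (b (k - k1)%Z)))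
                  (Cmult (cexpi (th * s')) (Cmult (a k1) (b (k - k1)%Z))))
    with (Cmult (Cminus (cexpi (th * s)) (cexpi (th * s'))) (Cmult (a k1) (b (k - k1)%Z))) by ring.
  rewrite !Cmod_mult.
  pose proof (cexpi_lipschitz (th * s) (th * s')) as He.
  replace (th * s - th * s') with (th * (s - s')) in He by ring. rewrite Rabs_mult in He.
  specialize (Ha k1). specialize (Hb (k - k1)%Z).
  pose proof (Cmod_ge_0 (a k1)). pose proof (Cmod_ge_0 (b (k - k1)%Z)).
  pose proof (Rabs_pos (s - s')). pose proof (Rabs_pos th).
  pose proof (Cmod_ge_0 (Cminus (cexpi (th * s)) (cexpi (th * s')))).
  assert (Hexp : Cmod (Cminus (cexpi (th * s)) (cexpi (th * s'))) <= 12 * INR N ^ 3 * Rabs (s - s')) by nra.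
  assert (Hab : Cmod (a k1) * Cmod (b (k - k1)%Z) <= M * M) by nra.
  pose proof (pow_le _ 3 (pos_INR N)). nra.
Qed.

Lemma Cmod_bracket_bounded_le N t (a b c d : fourier) k M :
  (forall j, Cmod (a j) <= M) -> (forall j, Cmod (b j) <= M) ->
  (forall j, Cmod (c j) <= M) -> (forall j, Cmod (d j) <= M) ->
  Cmod (galerkin_bracket N t a b c d k) <= INR N * (INR (S (2 * N)) * (M * M)).
Proof.
  intros Ha Hb Hc Hd. pose proof (pos_INR (S (2 * N))).
  apply Cmod_bracket_le; [nra|]. intros _.
  split; apply Cmod_conv_le; assumption.
Qed.

Lemma bracket_lipschitz N t (a b c d a' b' c' d' : fourier) k M e : 0 <= M ->
  (forall j, Cmod (a j) <= M) -> (forall j, Cmod (b' j) <= M) ->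
  (forall j, Cmod (c j) <= M) -> (forall j, Cmod (d' j) <= M) ->
  (forall j, Cmod (Cminus (a j) (a' j)) <= e) -> (forall j, Cmod (Cminus (b j) (b' j)) <= e) ->
  (forall j, Cmod (Cminus (c j) (c' j)) <= e) -> (forall j, Cmod (Cminus (d j) (d' j)) <= e) ->
  Cmod (Cminus (galerkin_bracket N t a b c d k) (galerkin_bracket N t a' b' c' d' k))
    <= INR N * (INR (S (2 * N)) * (2 * M * e)).
Proof.
  intros HM Ha Hb' Hc Hd' Ea Eb Ec Ed.
  pose proof (Rle_trans _ _ _ (Cmod_ge_0 _) (Ea 0%Z)). pose proof (pos_INR (S (2 * N))).
  apply Cmod_bracket_minus_le; [apply Rmult_le_pos; [|apply Rmult_le_pos]; lra|]. intros _.
  replace (Cminus (Cminus (conv N t k a b) (conv N t k c d)) (Cminus (conv N t k a' b') (conv N t k c' d')))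
    with (Cplus (Cminus (conv N t k a b) (conv N t k a' b'))
                (Copp (Cminus (conv N t k c d) (conv N t k c' d')))) by ring.
  eapply Rle_trans; [apply Cmod_triangle|]. rewrite Cmod_opp.
  pose proof (Cmod_conv_minus_le N t k a b a' b' M e Ha Hb' Ea Eb).
  pose proof (Cmod_conv_minus_le N t k c d c' d' M e Hc Hd' Ec Ed). lra.
Qed.

Lemma bracket_time_lipschitz N s s' (a b c d : fourier) k M :
  (forall j, Cmod (a j) <= M) -> (forall j, Cmod (b j) <= M) ->
  (forall j, Cmod (c j) <= M) -> (forall j, Cmod (d j) <= M) ->
  Cmod (Cminus (galerkin_bracket N s a b c d k) (galerkin_bracket N s' a b c d k))
    <= INR N * (INR (S (2 * N)) * (12 * INR N ^ 3 * (M * M) * Rabs (s - s'))).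
Proof.
  intros Ha Hb Hc Hd. pose proof (pos_INR (S (2 * N))). pose proof (pow_le _ 3 (pos_INR N)).
  pose proof (Rabs_pos (s - s')).
  apply Cmod_bracket_minus_le; [apply Rmult_le_pos; [lra|]; apply Rmult_le_pos; nra|]. intros Hk.
  replace (Cminus (Cminus (conv N s k a b) (conv N s k c d)) (Cminus (conv N s' k a b) (conv N s' k c d)))
    with (Cplus (Cminus (conv N s k a b) (conv N s' k a b))
                (Copp (Cminus (conv N s k c d) (conv N s' k c d)))) by ring.
  eapply Rle_trans; [apply Cmod_triangle|]. rewrite Cmod_opp.
  pose proof (Cmod_conv_time_minus_le N s s' k a b M Hk Ha Hb).
  pose proof (Cmod_conv_time_minus_le N s s' k c d M Hk Hc Hd). lra.
Qed.

Lemma proj_in N (f : fourier) k : k <> 0%Z -> (Z.abs k <= Z.of_nat N)%Z -> proj N f k = f k.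
Proof.
  intros H0 HN. unfold proj. destruct (Z.eqb_spec k 0); [contradiction|].
  apply Z.leb_le in HN. now rewrite HN.
Qed.

Lemma proj_out N (f : fourier) k : (Z.of_nat N < Z.abs k)%Z -> proj N f k = RtoC 0.
Proof.
  intros Hk. unfold proj. destruct (k =? 0)%Z; [reflexivity|].
  replace (Z.abs k <=? Z.of_nat N)%Z with false by (symmetry; apply Z.leb_gt; lia). reflexivity.
Qed.

Lemma Cmod_proj_le N (f : fourier) M : 0 <= M ->
  (forall j, Cmod (f j) <= M) -> forall j, Cmod (proj N f j) <= M.
Proof.
  intros HM H j. unfold proj.
  destruct (j =? 0)%Z; [|destruct (Z.abs j <=? Z.of_nat N)%Z]; rewrite ?Cmod_0; auto.
Qed.

Lemma Cmod_proj_minus_le N (f g : fourier) e : 0 <= e ->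
  (forall j, Cmod (Cminus (f j) (g j)) <= e) -> forall j, Cmod (Cminus (proj N f j) (proj N g j)) <= e.
Proof.
  intros He H j. unfold proj.
  destruct (j =? 0)%Z; [|destruct (Z.abs j <=? Z.of_nat N)%Z]; auto;
    replace (Cminus (RtoC 0) (RtoC 0)) with (RtoC 0) by ring; rewrite Cmod_0; exact He.
Qed.

Definition conj_symmetric (f : fourier) : Prop := forall j, f (- j)%Z = Cconj (f j).

Lemma Cconj_RtoC_0 : Cconj (RtoC 0) = RtoC 0.
Proof. unfold Cconj, RtoC. simpl. f_equal. ring. Qed.

Lemma proj_conj_symmetric N (f : fourier) : conj_symmetric f -> conj_symmetric (proj N f).
Proof.
  intros H j. unfold proj. rewrite Z.abs_opp.
  destruct (Z.eqb_spec j 0) as [-> | Hj]; [simpl; symmetry; apply Cconj_RtoC_0|].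
  destruct (Z.eqb_spec (- j) 0); [lia|].
  destruct (Z.abs j <=? Z.of_nat N)%Z; [apply H | symmetry; apply Cconj_RtoC_0].
Qed.

Lemma conv_conj N t k (a b : fourier) : conj_symmetric a -> conj_symmetric b ->
  conv N t (- k) a b = Cconj (conv N t k a b).
Proof.
  intros Ha Hb. unfold conv. rewrite sum_n_Cconj, (sum_n_rev (2 * N)).
  apply sum_n_ext_loc. intros j Hj.
  replace (Z.of_nat (2 * N - j) - Z.of_nat N)%Z with (- (Z.of_nat j - Z.of_nat N))%Z by lia.
  set (k1 := (Z.of_nat j - Z.of_nat N)%Z).
  replace (- k - - k1)%Z with (- (k - k1))%Z by lia.
  rewrite Ha, Hb, !Cmult_conj, <- cexpi_opp, !opp_IZR. do 3 f_equal. ring.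
Qed.

Lemma galerkin_bracket_conj N t (a b c d : fourier) k :
  conj_symmetric a -> conj_symmetric b -> conj_symmetric c -> conj_symmetric d ->
  galerkin_bracket N t a b c d (- k) = Cconj (galerkin_bracket N t a b c d k).
Proof.
  intros Ha Hb Hc Hd. unfold galerkin_bracket. rewrite Z.abs_opp.
  destruct (Z.abs k <=? Z.of_nat N)%Z; [|symmetry; apply Cconj_RtoC_0].
  rewrite (conv_conj N t k a b Ha Hb), (conv_conj N t k c d Hc Hd), Cmult_conj, Cminus_conj.
  f_equal. rewrite opp_IZR. unfold Cconj, Cmult, Ci, RtoC. simpl. f_equal; ring.
Qed.

(* Coordinates of the Galerkin system: [(true, k)] is [u_k] and [(false, k)] is [v_k]. *)
Definition mode := (bool * Z)%type.

Definition conj_mode (i : mode) : mode := (fst i, (- snd i)%Z).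

Definition clamped_coeffs (M : R) (x : mode -> C) (b : bool) : fourier :=
  fun k => clampC M (x (b, k)).

Definition clamped_field (N : nat) (M : R) (i : mode) (s : R) (x : mode -> C) : C :=
  if (snd i =? 0)%Z then RtoC 0
  else if fst i then rhs_u N s (clamped_coeffs M x true) (clamped_coeffs M x false) (snd i)
  else rhs_v N s (clamped_coeffs M x true) (clamped_coeffs M x false) (snd i).

Definition field_bound (N : nat) (M : R) : R := INR N * (INR (S (2 * N)) * (4 * M * M)).
Definition field_lipschitz (N : nat) (M : R) : R := INR N * (INR (S (2 * N)) * (8 * M)).
Definition field_time_lipschitz (N : nat) (M : R) : R :=
  INR N * (INR (S (2 * N)) * (48 * INR N ^ 3 * M * M)).

Section ClampedField.

Variable N : nat.
Variable M : R.
Hypothesis M_ge0 : 0 <= M.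

Lemma Cmod_proj_clamped_le x b j : Cmod (proj N (clamped_coeffs M x b) j) <= 2 * M.
Proof. apply Cmod_proj_le; [lra|]. intros k. apply Cmod_clampC_le, M_ge0. Qed.

Lemma Cmod_proj_clamped_minus_le x y d b : (forall j, Cmod (Cminus (x j) (y j)) <= d) ->
  forall j, Cmod (Cminus (proj N (clamped_coeffs M x b) j) (proj N (clamped_coeffs M y b) j)) <= 2 * d.
Proof.
  intros H. pose proof (Rle_trans _ _ _ (Cmod_ge_0 _) (H (true, 0%Z))).
  apply Cmod_proj_minus_le; [lra|]. intros j.
  eapply Rle_trans; [apply clampC_lipschitz, M_ge0|]. specialize (H (b, j)). lra.
Qed.

Lemma field_bound_ge0 : 0 <= field_bound N M.
Proof.
  unfold field_bound. pose proof (pos_INR N). pose proof (pos_INR (S (2 * N))).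
  apply Rmult_le_pos; [lra|]. apply Rmult_le_pos; [lra|]. nra.
Qed.

Lemma field_lipschitz_ge0 : 0 <= field_lipschitz N M.
Proof.
  unfold field_lipschitz. pose proof (pos_INR N). pose proof (pos_INR (S (2 * N))).
  apply Rmult_le_pos; [lra|]. apply Rmult_le_pos; lra.
Qed.

Lemma Cmod_clamped_field_le i s x : Cmod (clamped_field N M i s x) <= field_bound N M.
Proof.
  unfold clamped_field. destruct (snd i =? 0)%Z; [rewrite Cmod_0; apply field_bound_ge0|].
  pose proof (pos_INR (S (2 * N))).
  unfold field_bound. replace (4 * M * M) with (2 * M * (2 * M)) by ring.
  destruct (fst i); [rewrite rhs_u_bracket | rewrite rhs_v_bracket];
    apply Cmod_bracket_bounded_le; apply Cmod_proj_clamped_le.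
Qed.

Lemma clamped_field_lipschitz i s x y d : (forall j, Cmod (Cminus (x j) (y j)) <= d) ->
  Cmod (Cminus (clamped_field N M i s x) (clamped_field N M i s y)) <= field_lipschitz N M * d.
Proof.
  intros H. pose proof (Rle_trans _ _ _ (Cmod_ge_0 _) (H (true, 0%Z))).
  unfold clamped_field. destruct (snd i =? 0)%Z.
  { replace (Cminus (RtoC 0) (RtoC 0)) with (RtoC 0) by ring. rewrite Cmod_0.
    pose proof field_lipschitz_ge0. nra. }
  replace (field_lipschitz N M * d) with (INR N * (INR (S (2 * N)) * (2 * (2 * M) * (2 * d))))
    by (unfold field_lipschitz; ring).
  destruct (fst i); [rewrite !rhs_u_bracket | rewrite !rhs_v_bracket];
    apply bracket_lipschitz; try lra;
    solve [apply Cmod_proj_clamped_le | apply Cmod_proj_clamped_minus_le; exact H].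
Qed.

Lemma clamped_field_time_lipschitz i s s' x :
  Cmod (Cminus (clamped_field N M i s x) (clamped_field N M i s' x))
    <= field_time_lipschitz N M * Rabs (s - s').
Proof.
  unfold clamped_field. destruct (snd i =? 0)%Z.
  { replace (Cminus (RtoC 0) (RtoC 0)) with (RtoC 0) by ring. rewrite Cmod_0.
    unfold field_time_lipschitz. pose proof (pos_INR N). pose proof (pos_INR (S (2 * N))).
    pose proof (pow_le _ 3 (pos_INR N)). pose proof (Rabs_pos (s - s')).
    apply Rmult_le_pos; [|lra]. apply Rmult_le_pos; [lra|]. apply Rmult_le_pos; [lra|].
    apply Rmult_le_pos; [|lra]. apply Rmult_le_pos; [|lra]. lra. }
  replace (field_time_lipschitz N M * Rabs (s - s'))
    with (INR N * (INR (S (2 * N)) * (12 * INR N ^ 3 * (2 * M * (2 * M)) * Rabs (s - s'))))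
    by (unfold field_time_lipschitz; ring).
  destruct (fst i); [rewrite !rhs_u_bracket | rewrite !rhs_v_bracket];
    apply bracket_time_lipschitz; apply Cmod_proj_clamped_le.
Qed.

Lemma clamped_coeffs_conj_symmetric x b : (forall j, x (conj_mode j) = Cconj (x j)) ->
  conj_symmetric (clamped_coeffs M x b).
Proof. intros H k. unfold clamped_coeffs. rewrite <- clampC_conj by exact M_ge0. f_equal. apply (H (b, k)). Qed.

Lemma clamped_field_conj i s x : (forall j, x (conj_mode j) = Cconj (x j)) ->
  clamped_field N M (conj_mode i) s x = Cconj (clamped_field N M i s x).
Proof.
  intros H. unfold clamped_field, conj_mode. simpl.
  destruct (Z.eqb_spec (snd i) 0) as [-> | Hi]; [simpl; symmetry; apply Cconj_RtoC_0|].
  destruct (Z.eqb_spec (- snd i) 0); [lia|].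
  pose proof (clamped_coeffs_conj_symmetric x true H). pose proof (clamped_coeffs_conj_symmetric x false H).
  destruct (fst i); [rewrite !rhs_u_bracket | rewrite !rhs_v_bracket];
    apply galerkin_bracket_conj; apply proj_conj_symmetric; assumption.
Qed.

End ClampedField.

(** * Cancellation of the energy flux *)

Lemma sum_n_C0 n : sum_n (fun _ => RtoC 0) n = RtoC 0.
Proof.
  induction n as [|n IH]; [rewrite sum_O; reflexivity|].
  rewrite sum_Sn, IH. change (Cplus (RtoC 0) (RtoC 0) = RtoC 0). ring.
Qed.

Lemma sum_n_indicator (psi : nat -> C) (w : Z) n :
  sum_n (fun j => if (Z.of_nat j =? w)%Z then psi j else RtoC 0) n =
  if ((0 <=? w)%Z && (w <=? Z.of_nat n)%Z)%bool then psi (Z.to_nat w) else RtoC 0.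
Proof.
  induction n as [|n IH].
  - rewrite sum_O. simpl Z.of_nat.
    destruct (Z.eqb_spec 0 w) as [<- | H]; [reflexivity|].
    destruct (Z.leb_spec 0 w), (Z.leb_spec w 0); simpl; try reflexivity; lia.
  - rewrite sum_Sn, IH. change (Cplus (if ((0 <=? w)%Z && (w <=? Z.of_nat n)%Z)%bool then psi (Z.to_nat w) else RtoC 0)
      (if (Z.of_nat (S n) =? w)%Z then psi (S n) else RtoC 0)
      = if ((0 <=? w)%Z && (w <=? Z.of_nat (S n))%Z)%bool then psi (Z.to_nat w) else RtoC 0).
    destruct (Z.eqb_spec (Z.of_nat (S n)) w) as [<- | Hw].
    + rewrite Nat2Z.id.
      destruct (Z.leb_spec 0 (Z.of_nat (S n))), (Z.leb_spec (Z.of_nat (S n)) (Z.of_nat n)),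
        (Z.leb_spec (Z.of_nat (S n)) (Z.of_nat (S n))); simpl; try lia. Cring.
    + destruct (Z.leb_spec 0 w), (Z.leb_spec w (Z.of_nat n)), (Z.leb_spec w (Z.of_nat (S n)));
        simpl; try Cring; lia.
Qed.

Lemma Cmult_3_eq0 (w : C) : Cplus (Cplus w w) w = RtoC 0 -> w = RtoC 0.
Proof.
  intros H.
  replace w with (Cmult (RtoC (/3)) (Cplus (Cplus w w) w)); [rewrite H; ring|].
  replace (Cplus (Cplus w w) w) with (Cmult (RtoC 3) w)
    by (replace (RtoC 3) with (Cplus (Cplus (RtoC 1) (RtoC 1)) (RtoC 1))
          by (rewrite <- !RtoC_plus; f_equal; ring); ring).
  rewrite Cmult_assoc, <- RtoC_mult, Rinv_l by lra. ring.
Qed.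

Definition zmode (N j : nat) : Z := (Z.of_nat j - Z.of_nat N)%Z.

Lemma zmode_rev N j : (j <= 2 * N)%nat -> zmode N (2 * N - j) = (- zmode N j)%Z.
Proof. intros H. unfold zmode. rewrite Nat2Z.inj_sub by exact H. lia. Qed.

Lemma zmode_range N j : (j <= 2 * N)%nat -> (Z.abs (zmode N j) <= Z.of_nat N)%Z.
Proof. intros H. unfold zmode. lia. Qed.

Definition supported_in (N : nat) (f : fourier) : Prop :=
  forall m, (Z.of_nat N < Z.abs m)%Z -> f m = RtoC 0.

Lemma proj_supported_in N (f : fourier) : supported_in N (proj N f).
Proof. intros m Hm. exact (proj_out N f m Hm). Qed.

Section Cancellation.

Variable N : nat.
Variable t : R.

Definition triple_sum (g : Z -> Z -> Z -> C) : C :=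
  sum_n (fun j1 => sum_n (fun j2 => sum_n (fun j3 =>
    g (zmode N j1) (zmode N j2) (zmode N j3)) (2 * N)) (2 * N)) (2 * N).

Lemma triple_sum_ext g h : (forall a b c, g a b c = h a b c) -> triple_sum g = triple_sum h.
Proof.
  intros H. unfold triple_sum. do 3 (apply sum_n_ext; intros). apply H.
Qed.

Lemma triple_sum_swap12 g : triple_sum g = triple_sum (fun a b c => g b a c).
Proof. unfold triple_sum. now rewrite sum_n_switch. Qed.

Lemma triple_sum_swap23 g : triple_sum g = triple_sum (fun a b c => g a c b).
Proof. unfold triple_sum. apply sum_n_ext. intros j1. now rewrite sum_n_switch. Qed.

Lemma triple_sum_swap13 g : triple_sum g = triple_sum (fun a b c => g c b a).
Proof. now rewrite triple_sum_swap12, triple_sum_swap23, triple_sum_swap12. Qed.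

Lemma triple_sum_lin (al be : C) g h :
  triple_sum (fun a b c => Cplus (Cmult al (g a b c)) (Cmult be (h a b c)))
  = Cplus (Cmult al (triple_sum g)) (Cmult be (triple_sum h)).
Proof.
  unfold triple_sum. rewrite <- !sum_n_Cmult_l, <- sum_n_Cplus. apply sum_n_ext. intros.
  rewrite <- !sum_n_Cmult_l, <- sum_n_Cplus. apply sum_n_ext. intros.
  rewrite <- !sum_n_Cmult_l, <- sum_n_Cplus. reflexivity.
Qed.

Lemma triple_sum_plus g h :
  triple_sum (fun a b c => Cplus (g a b c) (h a b c)) = Cplus (triple_sum g) (triple_sum h).
Proof.
  rewrite (triple_sum_ext _ (fun a b c => Cplus (Cmult (RtoC 1) (g a b c)) (Cmult (RtoC 1) (h a b c))))
    by (intros; Cring).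
  rewrite triple_sum_lin. Cring.
Qed.

Lemma triple_sum_0 g : (forall a b c, g a b c = RtoC 0) -> triple_sum g = RtoC 0.
Proof.
  intros H. rewrite (triple_sum_ext g (fun _ _ _ => RtoC 0)) by exact H.
  unfold triple_sum. rewrite (sum_n_ext _ (fun _ => RtoC 0)); [apply sum_n_C0|].
  intros j. rewrite (sum_n_ext _ (fun _ => RtoC 0)); [apply sum_n_C0|].
  intros. apply sum_n_C0.
Qed.

Definition resonant (a b c : Z) : C := if (a + b + c =? 0)%Z then RtoC 1 else RtoC 0.
Definition phase (a b c : Z) : C := cexpi (- (3 * IZR a * IZR b * IZR c * t)).
Definition weight (a b c : Z) : C := Cmult (resonant a b c) (phase a b c).

Lemma weight_swap12 a b c : weight b a c = weight a b c.
Proof.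
  unfold weight, resonant, phase. replace (b + a + c)%Z with (a + b + c)%Z by lia.
  do 3 f_equal. ring.
Qed.

Lemma weight_swap23 a b c : weight a c b = weight a b c.
Proof.
  unfold weight, resonant, phase. replace (a + c + b)%Z with (a + b + c)%Z by lia.
  do 3 f_equal. ring.
Qed.

Lemma weight_swap13 a b c : weight c b a = weight a b c.
Proof. now rewrite weight_swap12, weight_swap23, weight_swap12. Qed.

Definition trilinear (P Q S : fourier) : C :=
  triple_sum (fun a b c => Cmult (Cmult (weight a b c) (RtoC (IZR a))) (Cmult (P a) (Cmult (Q b) (S c)))).

Lemma trilinear_swap23 P Q S : trilinear P Q S = trilinear P S Q.
Proof.
  unfold trilinear. rewrite triple_sum_swap23. apply triple_sum_ext. intros a b c.
  rewrite weight_swap23. Cring.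
Qed.

Lemma trilinear_lin1 P1 P2 Q S (al be : C) :
  trilinear (fun m => Cplus (Cmult al (P1 m)) (Cmult be (P2 m))) Q S
  = Cplus (Cmult al (trilinear P1 Q S)) (Cmult be (trilinear P2 Q S)).
Proof. unfold trilinear. rewrite <- triple_sum_lin. apply triple_sum_ext. intros. Cring. Qed.

(* The weight is symmetric and the factors a, b, c of the three terms add up to a + b + c = 0. *)
Lemma trilinear_cyclic_sum P Q S :
  Cplus (Cplus (trilinear P Q S) (trilinear Q P S)) (trilinear S Q P) = RtoC 0.
Proof.
  set (h a b c := Cmult (weight a b c) (Cmult (P a) (Cmult (Q b) (S c)))).
  assert (H1 : trilinear P Q S = triple_sum (fun a b c => Cmult (RtoC (IZR a)) (h a b c))).
  { unfold trilinear. apply triple_sum_ext. intros. unfold h. Cring. }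
  assert (H2 : trilinear Q P S = triple_sum (fun a b c => Cmult (RtoC (IZR b)) (h a b c))).
  { unfold trilinear. rewrite triple_sum_swap12. apply triple_sum_ext. intros.
    unfold h. rewrite weight_swap12. Cring. }
  assert (H3 : trilinear S Q P = triple_sum (fun a b c => Cmult (RtoC (IZR c)) (h a b c))).
  { unfold trilinear. rewrite triple_sum_swap13. apply triple_sum_ext. intros.
    unfold h. rewrite weight_swap13. Cring. }
  rewrite H1, H2, H3, <- !triple_sum_plus. apply triple_sum_0. intros a b c.
  unfold h, weight, resonant. destruct (Z.eqb_spec (a + b + c) 0) as [E | E]; [|Cring].
  replace (IZR c) with (- IZR a - IZR b) by (rewrite <- !opp_IZR, <- !minus_IZR; f_equal; lia).
  rewrite RtoC_minus, RtoC_opp. Cring.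
Qed.

Lemma resonant_sum (phi : Z -> C) x y : supported_in N phi ->
  sum_n (fun j => Cmult (resonant x y (zmode N j)) (phi (zmode N j))) (2 * N) = phi (- x - y)%Z.
Proof.
  intros Hphi.
  rewrite (sum_n_ext _ (fun j => if (Z.of_nat j =? - x - y + Z.of_nat N)%Z then phi (zmode N j) else RtoC 0)).
  2:{ intros j. unfold resonant, zmode.
      destruct (Z.eqb_spec (x + y + (Z.of_nat j - Z.of_nat N)) 0),
        (Z.eqb_spec (Z.of_nat j) (- x - y + Z.of_nat N)); try lia; Cring. }
  rewrite (sum_n_indicator (fun j => phi (zmode N j))).
  destruct (Z.leb_spec 0 (- x - y + Z.of_nat N)), (Z.leb_spec (- x - y + Z.of_nat N) (Z.of_nat (2 * N)));
    simpl; try (symmetry; apply Hphi; lia).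
  f_equal. unfold zmode. rewrite Z2Nat.id by lia. lia.
Qed.

Definition conv_pairing (a b c : fourier) : C :=
  sum_n (fun j => Cmult (Cmult (RtoC (IZR (zmode N j))) (c (- zmode N j)%Z)) (conv N t (zmode N j) a b))
    (2 * N).

Lemma conv_pairing_trilinear (a b c : fourier) : supported_in N b ->
  conv_pairing a b c = Cmult (RtoC (-1)) (trilinear c a b).
Proof.
  intros Hb. unfold conv_pairing, trilinear, triple_sum.
  rewrite (sum_n_rev (2 * N)), <- sum_n_Cmult_l.
  apply sum_n_ext_loc. intros j Hj. rewrite (zmode_rev N j Hj).
  unfold conv. rewrite <- !sum_n_Cmult_l. apply sum_n_ext. intros j1.
  set (x := zmode N j). set (y := zmode N j1). change (Z.of_nat j1 - Z.of_nat N)%Z with y.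
  set (phi z := Cmult (Cmult (phase x y z) (RtoC (IZR x))) (Cmult (c x) (Cmult (a y) (b z)))).
  rewrite (sum_n_ext _ (fun j3 => Cmult (resonant x y (zmode N j3)) (phi (zmode N j3))))
    by (intros j3; unfold phi, weight; Cring).
  rewrite resonant_sum by (intros m Hm; unfold phi; rewrite (Hb m Hm); Cring).
  unfold phi, phase. rewrite Z.opp_involutive.
  replace (3 * IZR (- x) * IZR y * IZR (- x - y) * t) with (- (3 * IZR x * IZR y * IZR (- x - y) * t))
    by (rewrite opp_IZR; ring).
  rewrite opp_IZR, RtoC_opp. Cring.
Qed.

(* Every cubic term of d/dt E cancels by the cyclic identity applied to (p,p,p), (q,q,q), (p,p,q)
   and (q,q,p). *)
Lemma energy_flux_vanishes (p q : fourier) : supported_in N p -> supported_in N q ->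
  sum_n (fun j =>
    Cplus (Cmult (Cminus (Cmult (RtoC 3) (p (- zmode N j)%Z)) (q (- zmode N j)%Z))
                 (galerkin_bracket N t p q p p (zmode N j)))
          (Cmult (Cminus (Cmult (RtoC 3) (q (- zmode N j)%Z)) (p (- zmode N j)%Z))
                 (galerkin_bracket N t p q q q (zmode N j)))) (2 * N)
  = RtoC 0.
Proof.
  intros Hp Hq.
  set (cu m := Cplus (Cmult (RtoC 3) (p m)) (Cmult (RtoC (-1)) (q m))).
  set (cv m := Cplus (Cmult (RtoC 3) (q m)) (Cmult (RtoC (-1)) (p m))).
  set (al := Cmult (RtoC (/2)) Ci).
  transitivity (Cmult al (Cplus (Cminus (conv_pairing p q cu) (conv_pairing p p cu))
                                (Cminus (conv_pairing p q cv) (conv_pairing q q cv)))).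
  { unfold conv_pairing. rewrite <- !sum_n_Cminus, <- sum_n_Cplus, <- sum_n_Cmult_l.
    apply sum_n_ext_loc. intros j Hj. unfold galerkin_bracket.
    pose proof (zmode_range N j Hj) as Hr. apply Z.leb_le in Hr. rewrite Hr.
    unfold cu, cv, al. Cring. }
  rewrite !conv_pairing_trilinear by assumption. unfold cu, cv. rewrite !trilinear_lin1, (trilinear_swap23 q p q).
  pose proof (Cmult_3_eq0 _ (trilinear_cyclic_sum p p p)) as Hppp.
  pose proof (Cmult_3_eq0 _ (trilinear_cyclic_sum q q q)) as Hqqq.
  pose proof (trilinear_cyclic_sum p p q) as Hppq. pose proof (trilinear_cyclic_sum q q p) as Hqqp.
  replace (trilinear q p p)
    with (Cminus (Cplus (Cplus (trilinear p p q) (trilinear p p q)) (trilinear q p p))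
                 (Cplus (trilinear p p q) (trilinear p p q))) by ring.
  replace (trilinear p q q)
    with (Cminus (Cplus (Cplus (trilinear q q p) (trilinear q q p)) (trilinear p q q))
                 (Cplus (trilinear q q p) (trilinear q q p))) by ring.
  rewrite Hppq, Hqqp, Hppp, Hqqq.
  replace (RtoC 3) with (Cplus (Cplus (RtoC 1) (RtoC 1)) (RtoC 1)) by (rewrite <- !RtoC_plus; f_equal; ring).
  replace (RtoC (-1)) with (Copp (RtoC 1)) by (rewrite <- RtoC_opp; reflexivity).
  Cring.
Qed.

End Cancellation.

(** * Energy along the flow *)

Lemma is_derive_fst (f : R -> C) t z : is_derive f t z -> is_derive (fun s => fst (f s)) t (fst z).
Proof.
  intros H. unfold is_derive in *.
  apply (filterdiff_comp f (fun c : C_R_NormedModule => fst c) (fun y => scal y z)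
           (fun c : C_R_NormedModule => fst c)) in H.
  - eapply filterdiff_ext_lin; [exact H | reflexivity].
  - apply filterdiff_linear, (@is_linear_fst R_AbsRing R_NormedModule R_NormedModule).
Qed.

Lemma is_derive_snd (f : R -> C) t z : is_derive f t z -> is_derive (fun s => snd (f s)) t (snd z).
Proof.
  intros H. unfold is_derive in *.
  apply (filterdiff_comp f (fun c : C_R_NormedModule => snd c) (fun y => scal y z)
           (fun c : C_R_NormedModule => snd c)) in H.
  - eapply filterdiff_ext_lin; [exact H | reflexivity].
  - apply filterdiff_linear, (@is_linear_snd R_AbsRing R_NormedModule R_NormedModule).
Qed.

Definition dotC (a z : C) : R := fst a * fst z + snd a * snd z.

Lemma is_derive_Cmod_sqr (f : R -> C) t z : is_derive f t z ->
  is_derive (fun s => Cmod (f s) ^ 2) t (2 * dotC (f t) z).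
Proof.
  intros H. apply is_derive_ext with (fun s => fst (f s) ^ 2 + snd (f s) ^ 2).
  { intros s. symmetry. apply Cmod_sqr. }
  pose proof (is_derive_pow _ 2 _ _ (is_derive_fst f t z H)) as H1.
  pose proof (is_derive_pow _ 2 _ _ (is_derive_snd f t z H)) as H2.
  replace (2 * dotC (f t) z)
    with (plus (INR 2 * fst z * fst (f t) ^ pred 2) (INR 2 * snd z * snd (f t) ^ pred 2))
    by (unfold plus, dotC; simpl; ring).
  exact (@is_derive_plus R_AbsRing R_NormedModule _ _ t _ _ H1 H2).
Qed.

Lemma is_derive_Cminus (f g : R -> C) t a b : is_derive f t a -> is_derive g t b ->
  is_derive (fun s => Cminus (f s) (g s)) t (Cminus a b).
Proof. exact (@is_derive_minus R_AbsRing C_R_NormedModule f g t a b). Qed.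

Lemma is_derive_sum_n (f : nat -> R -> R) (df : nat -> R) t n :
  (forall k, (k <= n)%nat -> is_derive (f k) t (df k)) ->
  is_derive (fun s => sum_n (fun k => f k s) n) t (sum_n df n).
Proof.
  induction n as [|n IH]; intros H.
  - rewrite sum_O. eapply is_derive_ext; [|apply (H 0%nat); lia]. intros s. now rewrite sum_O.
  - rewrite sum_Sn. eapply is_derive_ext; [intros s; symmetry; apply sum_Sn|].
    apply (@is_derive_plus R_AbsRing R_NormedModule); [apply IH; intros; apply H; lia | apply H; lia].
Qed.

Section Continuation.

Variables h dh : R -> R.
Hypothesis h_derive : forall t, is_derive h t (dh t).
Hypothesis h_0 : h 0 = 0.
Hypothesis dh_small : forall t, 0 <= t -> h t < 1 -> dh t = 0.

Lemma h_continuous_at x eps : 0 < eps ->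
  exists del, 0 < del /\ forall r, Rabs (r - x) < del -> Rabs (h r - h x) < eps.
Proof.
  intros He.
  assert (Hc : continuity_pt h x).
  { apply continuity_pt_filterlim, (ex_derive_continuous h x). exists (dh x). apply h_derive. }
  destruct (Hc eps He) as [del [Hd H]]. exists del. split; [exact Hd|]. intros r Hr.
  destruct (Req_dec r x) as [-> | Hne]; [rewrite Rminus_diag, Rabs_R0; exact He|].
  apply (H r). split; [split; [exact I | auto] | exact Hr].
Qed.

Lemma vanishing_extends_right m : 0 <= m -> (forall r, 0 <= r <= m -> h r = 0) ->
  exists del, 0 < del /\ forall r, 0 <= r <= m + del -> h r = 0.
Proof.
  intros Hm Hzero. destruct (h_continuous_at m (1/2)) as [del [Hdel Hc]]; [lra|].
  exists (del / 2). split; [lra|]. intros r Hr.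
  destruct (Rle_dec r m) as [Hrm | Hrm]; [apply Hzero; lra|].
  pose proof (Hzero m ltac:(lra)) as Hhm.
  destruct (MVT_gen h m r dh) as [c [Hc1 Hc2]].
  - intros x _. apply h_derive.
  - intros x _. apply continuity_pt_filterlim, (ex_derive_continuous h x). exists (dh x). apply h_derive.
  - rewrite Rmin_left in Hc1 by lra. rewrite Rmax_right in Hc1 by lra.
    assert (Hhc : Rabs (h c - h m) < 1/2) by (apply Hc; rewrite Rabs_right; lra).
    rewrite Hhm, Rminus_0_r in Hhc. apply Rabs_def2 in Hhc.
    rewrite dh_small in Hc2 by lra. lra.
Qed.

Lemma vanishing_closed m : 0 < m -> (forall r, 0 <= r < m -> h r = 0) -> h m = 0.
Proof.
  intros Hm Hzero. destruct (Req_dec (h m) 0) as [E | Hne]; [exact E | exfalso].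
  pose proof (Rabs_pos_lt _ Hne).
  destruct (h_continuous_at m (Rabs (h m) / 2)) as [del [Hdel Hc]]; [lra|].
  set (r := Rmax 0 (m - del / 2)).
  assert (Hr : 0 <= r < m) by (unfold r, Rmax; destruct (Rle_dec 0 (m - del / 2)); lra).
  assert (Hrm : Rabs (r - m) < del)
    by (unfold r, Rmax; destruct (Rle_dec 0 (m - del / 2)); rewrite Rabs_left; lra).
  specialize (Hc r Hrm). rewrite (Hzero r Hr), Rminus_0_l, Rabs_Ropp in Hc. lra.
Qed.

(* Continuity argument on the supremum of the times up to which [h] vanishes. *)
Lemma vanishes_forward T : 0 <= T -> h T = 0.
Proof.
  intros HT.
  set (E s := 0 <= s <= T /\ forall r, 0 <= r <= s -> h r = 0).
  assert (HE0 : E 0) by (split; [lra | intros r Hr; replace r with 0 by lra; exact h_0]).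
  destruct (completeness E) as [m [Hub Hlub]].
  { exists T. intros s [Hs _]. lra. }
  { exists 0. exact HE0. }
  assert (Hm0 : 0 <= m) by (apply Hub, HE0).
  assert (HmT : m <= T) by (apply Hlub; intros s [Hs _]; lra).
  assert (Hbelow : forall r, 0 <= r < m -> h r = 0).
  { intros r Hr. destruct (classic (exists s, E s /\ r <= s)) as [[s [[_ Hs] Hrs]] | Hn].
    - apply Hs. lra.
    - exfalso. enough (m <= r) by lra. apply Hlub. intros s Es.
      destruct (Rle_dec s r) as [Hsr | Hsr]; [exact Hsr|]. exfalso. apply Hn. exists s. split; [exact Es | lra]. }
  assert (Hupto : forall r, 0 <= r <= m -> h r = 0).
  { intros r Hr. destruct (Req_dec r m) as [-> | Hne]; [|apply Hbelow; lra].
    destruct (Req_dec m 0) as [-> | Hm]; [exact h_0 | apply vanishing_closed; [lra | exact Hbelow]]. }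
  destruct (Req_dec m T) as [<- | HmT']; [apply Hupto; lra | exfalso].
  destruct (vanishing_extends_right m Hm0 Hupto) as [del [Hdel Hext]].
  set (d := Rmin del (T - m)).
  assert (Hd : 0 < d <= del /\ m + d <= T) by (unfold d, Rmin; destruct (Rle_dec del (T - m)); lra).
  assert (m + d <= m) by (apply Hub; split; [lra | intros r Hr; apply Hext; lra]). lra.
Qed.

End Continuation.

(* [L2_terms w n] collects the modes k = +-(n+1), so this is the norm over 0 < |k| <= N. *)
Definition H0_norm2_trunc (N : nat) (w : fourier) : R := sum_n (L2_terms w) (N - 1).

Definition energy_trunc (N : nat) (u v : fourier) : R :=
  2 * H0_norm2_trunc N u + 2 * H0_norm2_trunc N v + H0_norm2_trunc N (fsub u v).

Lemma L2_terms_ge0 w n : 0 <= L2_terms w n.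
Proof.
  unfold L2_terms. pose proof (pow2_ge_0 (Cmod (w (Z.of_nat n + 1)%Z))).
  pose proof (pow2_ge_0 (Cmod (w (- (Z.of_nat n + 1))%Z))). lra.
Qed.

Lemma H0_norm2_trunc_ge0 N w : 0 <= H0_norm2_trunc N w.
Proof. apply sum_n_ge0, L2_terms_ge0. Qed.

Lemma Cmod_sqr_le_H0_norm2_trunc N w k : (0 < Z.abs k <= Z.of_nat N)%Z ->
  Cmod (w k) ^ 2 <= H0_norm2_trunc N w.
Proof.
  intros Hk. set (n := (Z.to_nat (Z.abs k) - 1)%nat).
  eapply Rle_trans; [|apply (sum_n_ge_term (L2_terms w) (N - 1) n (L2_terms_ge0 w)); unfold n; lia].
  unfold L2_terms. pose proof (pow2_ge_0 (Cmod (w (Z.of_nat n + 1)%Z))).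
  pose proof (pow2_ge_0 (Cmod (w (- (Z.of_nat n + 1))%Z))).
  assert (Hkn : k = (Z.of_nat n + 1)%Z \/ k = (- (Z.of_nat n + 1))%Z) by (unfold n; lia).
  destruct Hkn as [E | E]; rewrite E; lra.
Qed.

Lemma Cmod_sqr_le_energy_trunc N u v k : (0 < Z.abs k <= Z.of_nat N)%Z ->
  Cmod (u k) ^ 2 <= energy_trunc N u v /\ Cmod (v k) ^ 2 <= energy_trunc N u v.
Proof.
  intros Hk. unfold energy_trunc.
  pose proof (Cmod_sqr_le_H0_norm2_trunc N u k Hk). pose proof (Cmod_sqr_le_H0_norm2_trunc N v k Hk).
  pose proof (H0_norm2_trunc_ge0 N u). pose proof (H0_norm2_trunc_ge0 N v).
  pose proof (H0_norm2_trunc_ge0 N (fsub u v)).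
  pose proof (pow2_ge_0 (Cmod (u k))). pose proof (pow2_ge_0 (Cmod (v k))). lra.
Qed.

Lemma ex_series_fsub u v : ex_series (L2_terms u) -> ex_series (L2_terms v) ->
  ex_series (L2_terms (fsub u v)).
Proof.
  intros Hu Hv.
  apply (@ex_series_le R_AbsRing R_CompleteNormedModule _ (fun n => 2 * L2_terms u n + 2 * L2_terms v n)).
  - intros n. change (Rabs (L2_terms (fsub u v) n) <= 2 * L2_terms u n + 2 * L2_terms v n).
    rewrite Rabs_pos_eq by apply L2_terms_ge0.
    unfold L2_terms, fsub. rewrite !Cmod_sqr, !fst_Cminus, !snd_Cminus.
    set (z1 := u (Z.of_nat n + 1)%Z). set (z2 := u (- (Z.of_nat n + 1))%Z).
    set (w1 := v (Z.of_nat n + 1)%Z). set (w2 := v (- (Z.of_nat n + 1))%Z).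
    pose proof (pow2_ge_0 (fst z1 + fst w1)). pose proof (pow2_ge_0 (snd z1 + snd w1)).
    pose proof (pow2_ge_0 (fst z2 + fst w2)). pose proof (pow2_ge_0 (snd z2 + snd w2)). nra.
  - apply (@ex_series_plus R_AbsRing R_NormedModule); [exact (ex_series_scal_l 2 _ Hu) | exact (ex_series_scal_l 2 _ Hv)].
Qed.

Lemma H0_norm2_split N w : (0 < N)%nat -> ex_series (L2_terms w) ->
  H0_norm2 w = H0_norm2_trunc N w + Series (fun k => L2_terms w (N + k)%nat).
Proof.
  intros HN Hw. unfold H0_norm2, H0_norm2_trunc. rewrite (Series_incr_n _ N HN Hw), sum_n_Reals.
  now replace (pred N) with (N - 1)%nat by lia.
Qed.

Lemma sum_zmode_pairs (phi : Z -> R) N :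
  sum_n (fun j => phi (zmode (S N) j)) (2 * S N)
  = phi 0%Z + sum_n (fun n => phi (Z.of_nat n + 1)%Z + phi (- (Z.of_nat n + 1))%Z) N.
Proof.
  revert phi. induction N as [|N IH]; intros phi.
  - simpl (2 * 1)%nat. rewrite !sum_Sn, !sum_O. unfold zmode, plus. simpl. ring.
  - replace (2 * S (S N))%nat with (S (S (2 * S N))) by lia.
    rewrite sum_n_shift_l, sum_Sn.
    rewrite (sum_n_ext (fun j => phi (zmode (S (S N)) (S j))) (fun j => phi (zmode (S N) j)))
      by (intros j; f_equal; unfold zmode; lia).
    rewrite IH, sum_Sn.
    replace (zmode (S (S N)) 0) with (- (Z.of_nat (S N) + 1))%Z by (unfold zmode; lia).
    replace (zmode (S (S N)) (S (S (2 * S N)))) with (Z.of_nat (S N) + 1)%Z by (unfold zmode; lia).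
    unfold plus. simpl. ring.
Qed.

(* Rate of change of 2|a|^2 + 2|b|^2 + |a-b|^2 when a, b move with velocities fa, fb. *)
Definition energy_rate (a b fa fb : C) : R :=
  2 * (2 * dotC a fa) + 2 * (2 * dotC b fb) + 2 * dotC (Cminus a b) (Cminus fa fb).

Lemma is_derive_energy_density (f g : R -> C) t a b : is_derive f t a -> is_derive g t b ->
  is_derive (fun s => 2 * Cmod (f s) ^ 2 + 2 * Cmod (g s) ^ 2 + Cmod (Cminus (f s) (g s)) ^ 2) t
    (energy_rate (f t) (g t) a b).
Proof.
  intros Ha Hb.
  pose proof (is_derive_scal _ t 2 _ (is_derive_Cmod_sqr f t a Ha)) as H1.
  pose proof (is_derive_scal _ t 2 _ (is_derive_Cmod_sqr g t b Hb)) as H2.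
  pose proof (is_derive_Cmod_sqr _ t _ (is_derive_Cminus f g t a b Ha Hb)) as H3.
  exact (@is_derive_plus R_AbsRing R_NormedModule _ _ t _ _
           (@is_derive_plus R_AbsRing R_NormedModule _ _ t _ _ H1 H2) H3).
Qed.

Lemma energy_rate_eq (a b fa fb : C) :
  energy_rate a b fa fb
  = 2 * fst (Cplus (Cmult (Cminus (Cmult (RtoC 3) (Cconj a)) (Cconj b)) fa)
                   (Cmult (Cminus (Cmult (RtoC 3) (Cconj b)) (Cconj a)) fb)).
Proof. destruct a, b, fa, fb. unfold energy_rate, dotC, Cconj, Cminus, Cmult, Cplus, Copp, RtoC. simpl. ring. Qed.

Lemma galerkin_bracket_0 N t (a b c d : fourier) : galerkin_bracket N t a b c d 0%Z = RtoC 0.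
Proof.
  unfold galerkin_bracket. destruct (Z.abs 0 <=? Z.of_nat N)%Z; [|reflexivity].
  unfold Cmult, RtoC, Ci. simpl. f_equal; ring.
Qed.

Lemma energy_trunc_ge0 N u v : 0 <= energy_trunc N u v.
Proof.
  unfold energy_trunc. pose proof (H0_norm2_trunc_ge0 N u). pose proof (H0_norm2_trunc_ge0 N v).
  pose proof (H0_norm2_trunc_ge0 N (fsub u v)). lra.
Qed.

Lemma energy_trunc_eq_sum N u v :
  energy_trunc N u v = sum_n (fun n => 2 * L2_terms u n + 2 * L2_terms v n + L2_terms (fsub u v) n) (N - 1).
Proof.
  unfold energy_trunc, H0_norm2_trunc. generalize (N - 1)%nat. intros n.
  induction n as [|n IH]; [rewrite !sum_O; ring|]. rewrite !sum_Sn, <- IH. unfold plus. simpl. ring.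
Qed.

Definition initial_state (u v : fourier) (i : mode) : C := if fst i then u (snd i) else v (snd i).

Lemma initial_state_conj u v : in_H0 u -> in_H0 v ->
  forall j, initial_state u v (conj_mode j) = Cconj (initial_state u v j).
Proof.
  intros [[_ Hu] _] [[_ Hv] _] [b k]. unfold initial_state, conj_mode. simpl.
  destruct b; symmetry; [apply Hu | apply Hv].
Qed.

(* While the energy stays below its initial value plus 1, every mode has modulus below this radius,
   so the clamping is inactive. *)
Definition galerkin_radius (N : nat) (u v : fourier) : R := energy_trunc N u v + 2.

Section GalerkinSolution.

Variable N : nat.
Variables uin vin : fourier.
Hypothesis N_pos : (0 < N)%nat.
Hypothesis uin_H0 : in_H0 uin.
Hypothesis vin_H0 : in_H0 vin.

Let E0 := energy_trunc N uin vin.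
Let M := galerkin_radius N uin vin.
Let F := clamped_field N M.

Variable X : R -> mode -> C.
Hypothesis X_0 : X 0 = initial_state uin vin.
Hypothesis X_derive : forall t i, is_derive (fun s => X s i) t (F i t (X t)).
Hypothesis X_conj : forall t j, X t (conj_mode j) = Cconj (X t j).
Hypothesis X_frozen : forall i, (forall s x, F i s x = RtoC 0) -> forall t, X t i = initial_state uin vin i.

Let u (t : R) : fourier := fun k => X t (true, k).
Let v (t : R) : fourier := fun k => X t (false, k).

Lemma u_0 : u 0 = uin.
Proof. unfold u. now rewrite X_0. Qed.

Lemma v_0 : v 0 = vin.
Proof. unfold v. now rewrite X_0. Qed.

Lemma X_frozen_out t b k : k = 0%Z \/ (Z.of_nat N < Z.abs k)%Z -> X t (b, k) = initial_state uin vin (b, k).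
Proof.
  intros Hk. apply X_frozen. intros s x. unfold F, clamped_field. simpl.
  destruct Hk as [-> | Hk]; [reflexivity|]. destruct (Z.eqb_spec k 0); [reflexivity|].
  destruct b; [rewrite rhs_u_bracket | rewrite rhs_v_bracket]; unfold galerkin_bracket;
    replace (Z.abs k <=? Z.of_nat N)%Z with false by (symmetry; apply Z.leb_gt; lia); reflexivity.
Qed.

Definition in_box (t : R) : Prop := forall b k, (0 < Z.abs k <= Z.of_nat N)%Z ->
  Rabs (fst (X t (b, k))) <= M /\ Rabs (snd (X t (b, k))) <= M.

Lemma in_box_of_energy t : energy_trunc N (u t) (v t) < E0 + 1 -> in_box t.
Proof.
  intros HE b k Hk. destruct (Cmod_sqr_le_energy_trunc N (u t) (v t) k Hk) as [Hu Hv].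
  assert (Hz : Cmod (X t (b, k)) ^ 2 <= energy_trunc N (u t) (v t)) by (destruct b; assumption).
  rewrite Cmod_sqr in Hz. pose proof (pow2_ge_0 (fst (X t (b, k)))). pose proof (pow2_ge_0 (snd (X t (b, k)))).
  pose proof (energy_trunc_ge0 N uin vin). unfold M, galerkin_radius. fold E0.
  split; rewrite <- (Rabs_pos_eq (E0 + 2)) by lra; apply Rsqr_le_abs_0; unfold Rsqr; nra.
Qed.

Lemma field_eq_rhs t k : in_box t -> k <> 0%Z ->
  F (true, k) t (X t) = rhs_u N t (u t) (v t) k /\ F (false, k) t (X t) = rhs_v N t (u t) (v t) k.
Proof.
  intros Hbox Hk.
  assert (Hproj : forall b, proj N (clamped_coeffs M (X t) b) = proj N (fun k => X t (b, k))).
  { intros b. apply functional_extensionality. intros m. unfold proj.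
    destruct (Z.eqb_spec m 0); [reflexivity|].
    destruct (Z.leb_spec (Z.abs m) (Z.of_nat N)); [|reflexivity].
    destruct (Hbox b m) as [Hre Him]; [lia|]. unfold clamped_coeffs, clampC.
    rewrite (clampR_id M _ Hre), (clampR_id M _ Him). now destruct (X t (b, m)). }
  unfold F, clamped_field. simpl. destruct (Z.eqb_spec k 0); [contradiction|].
  rewrite !rhs_u_bracket, !rhs_v_bracket, !Hproj. split; reflexivity.
Qed.

Let rate (t : R) (k : Z) : R := energy_rate (u t k) (v t k) (F (true, k) t (X t)) (F (false, k) t (X t)).

Lemma is_derive_energy_trunc t :
  is_derive (fun s => energy_trunc N (u s) (v s)) t
    (sum_n (fun n => rate t (Z.of_nat n + 1)%Z + rate t (- (Z.of_nat n + 1))%Z) (N - 1)).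
Proof.
  set (density s k := 2 * Cmod (u s k) ^ 2 + 2 * Cmod (v s k) ^ 2 + Cmod (Cminus (u s k) (v s k)) ^ 2).
  apply is_derive_ext with
    (fun s => sum_n (fun n => density s (Z.of_nat n + 1)%Z + density s (- (Z.of_nat n + 1))%Z) (N - 1)).
  { intros s. rewrite energy_trunc_eq_sum. apply sum_n_ext. intros n.
    unfold density, L2_terms, fsub. Rring. }
  apply (is_derive_sum_n (fun n s => density s (Z.of_nat n + 1)%Z + density s (- (Z.of_nat n + 1))%Z)).
  intros n _. apply (@is_derive_plus R_AbsRing R_NormedModule); apply is_derive_energy_density; apply X_derive.
Qed.

Lemma rate_vanishes t : in_box t ->
  sum_n (fun n => rate t (Z.of_nat n + 1)%Z + rate t (- (Z.of_nat n + 1))%Z) (N - 1) = 0.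
Proof.
  intros Hbox.
  assert (Hrate0 : rate t 0%Z = 0).
  { unfold rate, F, clamped_field, energy_rate, dotC. simpl. ring. }
  pose proof (sum_zmode_pairs (rate t) (N - 1)) as Hpairs.
  replace (S (N - 1)) with N in Hpairs by lia. rewrite Hrate0 in Hpairs.
  enough (Hsum : sum_n (fun j => rate t (zmode N j)) (2 * N) = 0) by lra.
  set (p := proj N (u t)). set (q := proj N (v t)).
  pose proof (energy_flux_vanishes N t p q (proj_supported_in N _) (proj_supported_in N _)) as Hflux.
  rewrite (sum_n_ext_loc _ (fun j => 2 * fst (Cplus
      (Cmult (Cminus (Cmult (RtoC 3) (p (- zmode N j)%Z)) (q (- zmode N j)%Z)) (galerkin_bracket N t p q p p (zmode N j)))
      (Cmult (Cminus (Cmult (RtoC 3) (q (- zmode N j)%Z)) (p (- zmode N j)%Z)) (galerkin_bracket N t p q q q (zmode N j)))))).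
  - rewrite (sum_n_scal_l (K := R_Ring) (V := R_ModuleSpace) 2 _ (2 * N)), <- fst_sum_n, Hflux.
    unfold scal. simpl. unfold mult. simpl. ring.
  - intros j Hj. pose proof (zmode_range N j Hj). set (k := zmode N j) in *.
    destruct (Z.eqb_spec k 0) as [-> | Hk0].
    { rewrite Hrate0, !galerkin_bracket_0. simpl. ring. }
    destruct (field_eq_rhs t k Hbox Hk0) as [Ru Rv].
    assert (Cu : Cconj (u t k) = p (- k)%Z) by (unfold p; rewrite proj_in by lia; symmetry; apply (X_conj t (true, k))).
    assert (Cv : Cconj (v t k) = q (- k)%Z) by (unfold q; rewrite proj_in by lia; symmetry; apply (X_conj t (false, k))).
    unfold rate. rewrite energy_rate_eq, Ru, Rv, rhs_u_bracket, rhs_v_bracket, Cu, Cv. reflexivity.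
Qed.

Lemma energy_trunc_conserved t : 0 <= t -> energy_trunc N (u t) (v t) = E0.
Proof.
  intros Ht.
  enough (energy_trunc N (u t) (v t) - E0 = 0) by lra.
  apply (vanishes_forward (fun s => energy_trunc N (u s) (v s) - E0)
           (fun s => sum_n (fun n => rate s (Z.of_nat n + 1)%Z + rate s (- (Z.of_nat n + 1))%Z) (N - 1))); [| | |exact Ht].
  - intros s. set (dE := sum_n _ (N - 1)).
    replace dE with (minus dE 0) by (unfold minus, plus, opp, zero; simpl; ring).
    apply (@is_derive_minus R_AbsRing R_NormedModule); [apply is_derive_energy_trunc | exact (is_derive_const E0 s)].
  - cbv beta. rewrite u_0, v_0. unfold E0. ring.
  - intros s _ Hs. apply rate_vanishes, in_box_of_energy. lra.
Qed.

Lemma L2_terms_tail t n : (N <= n)%nat ->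
  L2_terms (u t) n = L2_terms uin n /\ L2_terms (v t) n = L2_terms vin n /\
  L2_terms (fsub (u t) (v t)) n = L2_terms (fsub uin vin) n.
Proof.
  intros Hn. unfold L2_terms, fsub, u, v. rewrite !X_frozen_out by lia. repeat split.
Qed.

Lemma ex_series_tail_eq (w w0 : fourier) : ex_series (L2_terms w0) ->
  (forall n, (N <= n)%nat -> L2_terms w n = L2_terms w0 n) -> ex_series (L2_terms w).
Proof.
  intros Hw0 Htail. apply (ex_series_incr_n _ N).
  apply (ex_series_ext (fun n => L2_terms w0 (N + n))); [intros n; symmetry; apply Htail; lia|].
  exact (proj1 (ex_series_incr_n _ N) Hw0).
Qed.

Lemma X_in_H0 t : in_H0 (u t) /\ in_H0 (v t).
Proof.
  destruct uin_H0 as [[Hu0 _] Hu]. destruct vin_H0 as [[Hv0 _] Hv].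
  split; (split; [split|]).
  - unfold u. rewrite X_frozen_out by lia. exact Hu0.
  - intros k. unfold u. exact (eq_sym (X_conj t (true, k))).
  - apply (ex_series_tail_eq _ uin Hu). intros n Hn. apply L2_terms_tail, Hn.
  - unfold v. rewrite X_frozen_out by lia. exact Hv0.
  - intros k. unfold v. exact (eq_sym (X_conj t (false, k))).
  - apply (ex_series_tail_eq _ vin Hv). intros n Hn. apply L2_terms_tail, Hn.
Qed.

(* The tail k > N is frozen and the truncated energy is conserved. *)
Lemma energy_conserved t : 0 <= t -> energy (u t) (v t) = energy uin vin.
Proof.
  intros Ht. destruct uin_H0 as [_ Hu]. destruct vin_H0 as [_ Hv]. destruct (X_in_H0 t) as [[_ Hut] [_ Hvt]].
  unfold energy.
  rewrite (H0_norm2_split N (u t) N_pos Hut), (H0_norm2_split N (v t) N_pos Hvt),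
    (H0_norm2_split N (fsub (u t) (v t)) N_pos (ex_series_fsub _ _ Hut Hvt)),
    (H0_norm2_split N uin N_pos Hu), (H0_norm2_split N vin N_pos Hv),
    (H0_norm2_split N (fsub uin vin) N_pos (ex_series_fsub _ _ Hu Hv)).
  rewrite (Series_ext (fun k => L2_terms (u t) (N + k)) (fun k => L2_terms uin (N + k)))
    by (intros k; apply L2_terms_tail; lia).
  rewrite (Series_ext (fun k => L2_terms (v t) (N + k)) (fun k => L2_terms vin (N + k)))
    by (intros k; apply L2_terms_tail; lia).
  rewrite (Series_ext (fun k => L2_terms (fsub (u t) (v t)) (N + k)) (fun k => L2_terms (fsub uin vin) (N + k)))
    by (intros k; apply L2_terms_tail; lia).
  pose proof (energy_trunc_conserved t Ht) as HE. unfold E0, energy_trunc in HE. lra.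
Qed.

Lemma X_solves_galerkin t : 0 <= t -> forall k, k <> 0%Z ->
  is_derive (fun s => u s k) t (rhs_u N t (u t) (v t) k) /\
  is_derive (fun s => v s k) t (rhs_v N t (u t) (v t) k).
Proof.
  intros Ht k Hk.
  assert (Hbox : in_box t) by (apply in_box_of_energy; rewrite (energy_trunc_conserved t Ht); lra).
  destruct (field_eq_rhs t k Hbox Hk) as [Ru Rv]. rewrite <- Ru, <- Rv.
  split; apply X_derive.
Qed.

Lemma galerkin_solution :
  u 0 = uin /\ v 0 = vin /\
  (forall t, 0 <= t -> in_H0 (u t) /\ in_H0 (v t)) /\
  (forall t, 0 <= t -> forall k, k <> 0%Z ->
     is_derive (fun s => u s k) t (rhs_u N t (u t) (v t) k) /\
     is_derive (fun s => v s k) t (rhs_v N t (u t) (v t) k)) /\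
  (forall t, 0 <= t -> energy (u t) (v t) = energy uin vin).
Proof.
  split; [exact u_0|]. split; [exact v_0|]. split; [intros t _; apply X_in_H0|].
  split; [exact X_solves_galerkin | exact energy_conserved].
Qed.

End GalerkinSolution.

Theorem proposition5p2 (N : nat) (uin vin : Z -> C) :
  (0 < N)%nat -> in_H0 uin -> in_H0 vin ->
  exists u v : R -> Z -> C,
    u 0%R = uin /\ v 0%R = vin /\
    (forall t : R, 0 <= t -> in_H0 (u t) /\ in_H0 (v t)) /\
    (forall t : R, 0 <= t -> forall k : Z, k <> 0%Z ->
        is_derive (fun s => u s k) t (rhs_u N t (u t) (v t) k) /\
        is_derive (fun s => v s k) t (rhs_v N t (u t) (v t) k)) /\
    (forall t : R, 0 <= t -> energy (u t) (v t) = energy uin vin).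
Proof.
  intros HN Hu Hv.
  set (M := galerkin_radius N uin vin).
  assert (HM : 0 <= M) by (pose proof (energy_trunc_ge0 N uin vin); unfold M, galerkin_radius; lra).
  destruct (bounded_lipschitz_ode_global mode (clamped_field N M) (initial_state uin vin)
              (field_bound N M) (field_lipschitz N M) (field_time_lipschitz N M) conj_mode
              (field_bound_ge0 N M) (field_lipschitz_ge0 N M HM) (Cmod_clamped_field_le N M HM)
              (clamped_field_lipschitz N M HM) (clamped_field_time_lipschitz N M HM)
              (clamped_field_conj N M HM) (initial_state_conj uin vin Hu Hv))
    as [X [X_0 [X_derive [X_conj X_frozen]]]].
  exists (fun t k => X t (true, k)), (fun t k => X t (false, k)).
  exact (galerkin_solution N uin vin HN Hu Hv X X_0 X_derive X_conj X_frozen).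
Qed.
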